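(* There exist absolute constants $c_1,c_2,c_3>0$ such that for every integer $n\ge 1$, every real $m\ge n$, and all distributions $p,q$ over $[n]$, with probability at least $9/10$ over the random variables $\widehat f_1,\dots,\widehat f_n$ the following bounds hold simultaneously: \[ c_1\min\Big(\frac{m^{3/2}\|p-q\|_1}{n^{1/2}}, \frac{m^2\|p-q\|_1^2}{n}\Big) \le \mathbb{E}\big[ Z\mid \widehat f_1,\dots,\widehat f_n \big] \le c_2\frac{m^{3/2}\|p-q\|_1}{n^{1/2}}, \qquad \operatorname{Var}\big[ Z \mid \widehat f_1,\dots,\widehat f_n \big] \le c_3\frac{m^2}{n}. \]
   Context: Let $p,q$ be distributions over $[n]$ and $m>0$. Let $\tilde X_i, X_i\sim\mathrm{Poi}(mp_i)$ and $\tilde Y_i,Y_i\sim \mathrm{Poi}(mq_i)$ ($i\in[n]$), all mutually independent (these are the symbol counts in two independent sets of $\mathrm{Poi}(m)$ samples from each of $p$ and $q$). For $m\ge n$ define $f_i=\max\{\sqrt{mn}\,|p_i-q_i|,\ n(p_i+q_i),\ 1\}$ and $\widehat f_i=\max\Big\{\frac{|\tilde X_i-\tilde Y_i|}{\sqrt{m/n}},\ \frac{\tilde X_i+\tilde Y_i}{m/n},\ 1\Big\}$; for $m<n$ define $f_i=\max\{m(p_i+q_i),1\}$ and $\widehat f_i=\max\{\tilde X_i+\tilde Y_i,1\}$. Let $Z_i=(X_i-Y_i)^2-X_i-Y_i$ and $Z=\sum_{i=1}^n Z_i/\widehat f_i$. $\|p-q\|_1=\sum_i|p_i-q_i|$.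 *)

From Stdlib Require Import Reals Lra Factorial.
From Coquelicot Require Import Coquelicot.
Open Scope R_scope.

Fixpoint sumR (n : nat) (f : nat -> R) : R :=
  match n with O => 0 | S k => sumR k f + f k end.

Definition pois (lam : R) (k : nat) : R := exp (- lam) * lam ^ k / INR (Factorial.fact k).

(* p is a probability distribution over [n] = {0,..,n-1} *)
Definition is_distr (n : nat) (p : nat -> R) : Prop :=
  (forall i, (i < n)%nat -> 0 <= p i) /\ sumR n p = 1.

Definition l1dist (n : nat) (p q : nat -> R) : R := sumR n (fun i => Rabs (p i - q i)).

Definition upd (X : nat -> nat) (k x : nat) : nat -> nat :=
  fun j => if Nat.eqb j k then x else X j.

(* Expectation of g(X,Y) where X_i ~ Poi(a i), Y_i ~ Poi(b i), i < k,
   all mutually independent (iterated series over the product pmf). *)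
Fixpoint ExpN (a b : nat -> R) (k : nat)
  (g : (nat -> nat) -> (nat -> nat) -> R) : R :=
  match k with
  | O => g (fun _ => O) (fun _ => O)
  | S k' => Series (fun x => Series (fun y =>
        pois (a k') x * pois (b k') y *
        ExpN a b k' (fun X Y => g (upd X k' x) (upd Y k' y))))
  end.

(* f_hat_i computed from the counts tX, tY of the first sample sets *)
Definition fhat (n : nat) (m : R) (tX tY : nat -> nat) (i : nat) : R :=
  if Rle_dec (INR n) m then
    Rmax (Rmax (Rabs (INR (tX i) - INR (tY i)) / sqrt (m / INR n))
               ((INR (tX i) + INR (tY i)) / (m / INR n))) 1
  else Rmax (INR (tX i) + INR (tY i)) 1.

Definition Zi (X Y : nat -> nat) (i : nat) : R :=
  (INR (X i) - INR (Y i)) ^ 2 - INR (X i) - INR (Y i).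

Definition Zstat (n : nat) (m : R) (tX tY X Y : nat -> nat) : R :=
  sumR n (fun i => Zi X Y i / fhat n m tX tY i).

(* E[Z | fhat] and Var[Z | fhat]: since (X,Y) is independent of (tX,tY),
   conditioning on fhat amounts to integrating over (X,Y) with fhat fixed. *)
Definition condE (n : nat) (m : R) (p q : nat -> R) (tX tY : nat -> nat) : R :=
  ExpN (fun i => m * p i) (fun i => m * q i) n (fun X Y => Zstat n m tX tY X Y).

Definition condVar (n : nat) (m : R) (p q : nat -> R) (tX tY : nat -> nat) : R :=
  ExpN (fun i => m * p i) (fun i => m * q i) n
    (fun X Y => (Zstat n m tX tY X Y - condE n m p q tX tY) ^ 2).

(* the good event, as a 0/1 indicator of the first sample counts *)
Definition good_ind (c1 c2 c3 : R) (n : nat) (m : R) (p q : nat -> R)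
  (tX tY : nat -> nat) : R :=
  let d := l1dist n p q in
  let E := condE n m p q tX tY in
  let V := condVar n m p q tX tY in
  if Rle_dec (c1 * Rmin (m * sqrt m * d / sqrt (INR n)) (m ^ 2 * d ^ 2 / INR n)) E then
  if Rle_dec E (c2 * (m * sqrt m * d / sqrt (INR n))) then
  if Rle_dec V (c3 * (m ^ 2 / INR n)) then 1 else 0 else 0 else 0.

(* Conditionally on the first sample, Z = sum_i Z_i / f_i has independent summands
   with E[Z_i] = (a_i - b_i)^2 and Var[Z_i] <= 150 S_i^2 + 24 D_i^2 S_i + 54 S_i,
   where a_i = m p_i, b_i = m q_i, S_i = a_i + b_i, D_i = a_i - b_i.  Hence
   E[Z | f] = sum_i D_i^2 / f_i and Var[Z | f] <= sum_i (150 S_i^2 + ...) / f_i^2.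
   Each of the three failure events is controlled by Markov's inequality: the
   quantities f_i, D_i^2 / f_i and (150 S_i^2 + ...) / f_i^2 are bounded pointwise
   by quartic polynomials in the first-sample counts (the envelopes [env]), whose
   expectations are explicit, and summing them gives expectations at most 1/30 of
   the respective thresholds.  The lower bound on the mean follows from
   Cauchy-Schwarz, E[Z | f] >= (sum_i |D_i|)^2 / sum_i f_i, once sum_i f_i is small. *)

From Stdlib Require Import Reals Lra Lia FunctionalExtensionality.
From Coquelicot Require Import Coquelicot.
Open Scope R_scope.

Lemma sumR_ext N f g : (forall i, (i < N)%nat -> f i = g i) -> sumR N f = sumR N g.
Proof.
  induction N as [|N IH]; intros H; simpl; auto.
  rewrite IH, H; auto; intros; apply H; lia.
Qed.

Lemma sumR_le N f g : (forall i, (i < N)%nat -> f i <= g i) -> sumR N f <= sumR N g.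
Proof.
  induction N as [|N IH]; intros H; simpl; [lra|].
  pose proof (H N ltac:(lia)). pose proof (IH ltac:(intros; apply H; lia)). lra.
Qed.

Lemma sumR_const N c : sumR N (fun _ => c) = INR N * c.
Proof. induction N as [|N IH]; simpl sumR; [simpl; ring|]. rewrite IH, S_INR; ring. Qed.

Lemma sumR_nonneg N f : (forall i, (i < N)%nat -> 0 <= f i) -> 0 <= sumR N f.
Proof.
  intros H. rewrite <- (Rmult_0_r (INR N)), <- sumR_const. apply sumR_le; auto.
Qed.

Lemma sumR_plus N f g : sumR N (fun i => f i + g i) = sumR N f + sumR N g.
Proof. induction N as [|N IH]; simpl; [ring|]. rewrite IH; ring. Qed.

Lemma sumR_scal N c f : sumR N (fun i => c * f i) = c * sumR N f.
Proof. induction N as [|N IH]; simpl; [ring|]. rewrite IH; ring. Qed.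

Lemma sumR_minus N f g : sumR N (fun i => f i - g i) = sumR N f - sumR N g.
Proof. induction N as [|N IH]; simpl; [ring|]. rewrite IH; ring. Qed.

Lemma sumR_abs N f : Rabs (sumR N f) <= sumR N (fun i => Rabs (f i)).
Proof.
  induction N as [|N IH]; simpl; [rewrite Rabs_R0; lra|].
  eapply Rle_trans; [apply Rabs_triang|lra].
Qed.

Lemma sumR_sqr N w : (sumR N w)^2 = sumR N (fun i => sumR N (fun j => w i * w j)).
Proof.
  transitivity (sumR N (fun i => sumR N w * w i)).
  - rewrite (sumR_scal N (sumR N w) w); ring.
  - apply sumR_ext; intros i _. rewrite Rmult_comm, <- sumR_scal. reflexivity.
Qed.

Lemma sumR_single N c i : (i < N)%nat ->
  (forall j, (j < N)%nat -> j <> i -> c j = 0) -> sumR N c = c i.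
Proof.
  induction N as [|N IH]; intros Hi H; [lia|]. simpl.
  destruct (Nat.eq_dec N i) as [->|Hne].
  - rewrite (sumR_ext i c (fun _ => 0)) by (intros j Hj; apply H; lia).
    rewrite sumR_const; ring.
  - rewrite IH; [rewrite (H N); auto; ring|lia|]. intros; apply H; auto; lia.
Qed.

Lemma sumR_eq0 N g : (forall i, (i < N)%nat -> 0 <= g i) -> sumR N g = 0 ->
  forall i, (i < N)%nat -> g i = 0.
Proof.
  induction N as [|N IH]; intros Hg Hs i Hi; [lia|]. simpl in Hs.
  assert (0 <= sumR N g) by (apply sumR_nonneg; intros; apply Hg; lia).
  pose proof (Hg N ltac:(lia)).
  destruct (Nat.eq_dec i N) as [->|Hne]; [lra|].
  apply IH; [intros; apply Hg; lia|lra|lia].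
Qed.

Lemma div_le_of_le_mul a b c : 0 < c -> a <= b * c -> a / c <= b.
Proof. intros Hc H. apply Rle_div_l; lra. Qed.

Lemma le_div_of_mul_le a b c : 0 < c -> a * c <= b -> a <= b / c.
Proof. intros Hc H. apply Rle_div_r; lra. Qed.

Lemma pow4_nonneg z : 0 <= z^4.
Proof. replace (z^4) with ((z^2)^2) by ring. apply pow2_ge_0. Qed.

Lemma sqr_add_le A B : (A + B)^2 <= 2 * A^2 + 2 * B^2.
Proof. pose proof (pow2_ge_0 (A - B)). nra. Qed.

Lemma sqr_sub_le A B : (A - B)^2 <= 2 * A^2 + 2 * B^2.
Proof. pose proof (pow2_ge_0 (A + B)). nra. Qed.

Lemma pow4_add_le A B : (A + B)^4 <= 8 * A^4 + 8 * B^4.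
Proof.
  replace ((A+B)^4) with (((A+B)^2)^2) by ring.
  pose proof (pow2_ge_0 (A+B)). pose proof (sqr_add_le A B).
  apply Rle_trans with ((2 * A^2 + 2 * B^2)^2); [apply pow_incr; auto|].
  pose proof (pow2_ge_0 (A^2 - B^2)). nra.
Qed.

(* Coquelicot's [Series] of a nonnegative sequence is nonnegative, even when it
   diverges (its value is then 0 by convention). *)
Lemma Series_nonneg (u : nat -> R) : (forall k, 0 <= u k) -> 0 <= Series u.
Proof.
  intros H. unfold Series.
  assert (Hl : Rbar_le (Lim_seq (fun _ => 0)) (Lim_seq (sum_n u))).
  { apply Lim_seq_le_loc. exists O. intros k _. rewrite sum_n_Reals.
    induction k; simpl; [apply H|]. specialize (H (S k)); lra. }
  rewrite Lim_seq_const in Hl.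
  destruct (Lim_seq (sum_n u)); simpl in *; lra.
Qed.

Lemma ex_series_dom (u v : nat -> R) :
  (forall k, Rabs (u k) <= v k) -> ex_series v -> ex_series u.
Proof. intros H Hv; apply (ex_series_le u v); auto. Qed.

Lemma pois_nonneg l k : 0 <= l -> 0 <= pois l k.
Proof.
  intros Hl; unfold pois. apply Rmult_le_pos; [apply Rmult_le_pos|].
  - left; apply exp_pos.
  - apply pow_le; auto.
  - left; apply Rinv_0_lt_compat, INR_fact_lt_0.
Qed.

Lemma pois_is_series l : is_series (pois l) 1.
Proof.
  pose proof (is_exp_Reals l) as H. unfold is_pseries in H.
  apply (is_series_scal_l (exp (- l))) in H.
  replace 1 with (scal (exp (-l)) (exp l)).
  2:{ unfold scal; simpl; unfold mult; simpl. rewrite <- exp_plus.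
      replace (-l + l) with 0 by ring. apply exp_0. }
  eapply is_series_ext; [|exact H].
  intros k; simpl. unfold scal; simpl; unfold mult; simpl. unfold pois.
  rewrite pow_n_pow. field. apply INR_fact_neq_0.
Qed.

Lemma pois_ex l : ex_series (pois l).
Proof. eexists; apply pois_is_series. Qed.

Lemma pois_Series l : Series (pois l) = 1.
Proof. apply is_series_unique, pois_is_series. Qed.

Lemma pois_succ l k : pois l (S k) * INR (S k) = l * pois l k.
Proof.
  unfold pois. rewrite fact_simpl, mult_INR. simpl pow.
  field. split; [apply INR_fact_neq_0|]. apply not_0_INR; lia.
Qed.

Definition PoiE (l : R) (f : nat -> R) : R := Series (fun k => pois l k * f k).
Definition PoiInt (l : R) (f : nat -> R) : Prop := ex_series (fun k => pois l k * f k).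

Lemma PoiE_ext l f g : (forall k, f k = g k) -> PoiE l f = PoiE l g.
Proof. intros H; unfold PoiE; apply Series_ext; intros; rewrite H; auto. Qed.

Lemma PoiInt_ext l f g : (forall k, f k = g k) -> PoiInt l f -> PoiInt l g.
Proof. intros H; unfold PoiInt; apply ex_series_ext; intros; rewrite H; auto. Qed.

Lemma PoiE_lin l c f g : PoiInt l f -> PoiInt l g ->
  PoiInt l (fun k => c * f k + g k) /\ PoiE l (fun k => c * f k + g k) = c * PoiE l f + PoiE l g.
Proof.
  unfold PoiInt, PoiE; intros Hf Hg.
  pose proof (ex_series_scal_l c _ Hf) as Hcf.
  split.
  - eapply ex_series_ext; [|apply (ex_series_plus _ _ Hcf Hg)].
    intros; unfold plus, scal; simpl; unfold mult; simpl; ring.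
  - rewrite <- Series_scal_l, <- Series_plus by auto. apply Series_ext; intros; ring.
Qed.

Lemma PoiE_stein l f : PoiInt l (fun k => f (S k)) ->
  PoiInt l (fun k => INR k * f k) /\ PoiE l (fun k => INR k * f k) = l * PoiE l (fun k => f (S k)).
Proof.
  unfold PoiInt, PoiE; intros H.
  assert (HS : forall k, pois l (S k) * (INR (S k) * f (S k)) = l * (pois l k * f (S k))).
  { intros k. rewrite <- Rmult_assoc, pois_succ. ring. }
  assert (Hx : ex_series (fun k => pois l k * (INR k * f k))).
  { apply ex_series_incr_1. eapply ex_series_ext; [|apply (ex_series_scal_l l _ H)].
    intros k; simpl; rewrite HS; auto. }
  split; auto.
  rewrite Series_incr_1 by auto. simpl INR at 1. rewrite <- Series_scal_l.
  rewrite Rmult_0_l, Rmult_0_r, Rplus_0_l. apply Series_ext; intros k. apply HS.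
Qed.

Fixpoint falling (x : R) (j : nat) : R :=
  match j with O => 1 | S j' => x * falling (x - 1) j' end.

Lemma falling_nat_nonneg k j : 0 <= falling (INR k) j.
Proof.
  revert k; induction j as [|j IH]; intros k; simpl; [lra|].
  destruct k as [|k]; [simpl; lra|].
  replace (INR (S k) - 1) with (INR k) by (rewrite S_INR; ring).
  apply Rmult_le_pos; [apply pos_INR|apply IH].
Qed.

Lemma PoiE_falling l j :
  PoiInt l (fun k => falling (INR k) j) /\ PoiE l (fun k => falling (INR k) j) = l ^ j.
Proof.
  induction j as [|j [IHi IHe]]; simpl.
  - unfold PoiInt, PoiE. split.
    + eapply ex_series_ext; [|apply pois_ex]. intros k; symmetry; apply Rmult_1_r.
    + transitivity (Series (pois l)); [apply Series_ext; intros; ring|apply pois_Series].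
  - assert (Hshift : forall k, falling (INR (S k) - 1) j = falling (INR k) j)
      by (intros k; rewrite S_INR; f_equal; ring).
    destruct (PoiE_stein l (fun k => falling (INR k - 1) j)) as [I E].
    { eapply PoiInt_ext; [|exact IHi]. intros; rewrite Hshift; auto. }
    split; [exact I|]. rewrite E, <- IHe. f_equal. apply PoiE_ext; auto.
Qed.

(** Expectation over independent Poisson count vectors. *)

Definition Stat := (nat -> nat) -> (nat -> nat) -> R.

Definition fix_at (g : Stat) (k x y : nat) : Stat := fun X Y => g (upd X k x) (upd Y k y).

Lemma upd_eq X k x : upd X k x k = x.
Proof. unfold upd; rewrite Nat.eqb_refl; auto. Qed.

Lemma upd_neq X k x j : j <> k -> upd X k x j = X j.
Proof. intros H; unfold upd. destruct (Nat.eqb_spec j k); [lia|auto]. Qed.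

Section ExpectationCalculus.
Variables a b : nat -> R.

Definition pmf2 (k x y : nat) := pois (a k) x * pois (b k) y.

Lemma ExpN_S k g : ExpN a b (S k) g =
  Series (fun x => Series (fun y => pmf2 k x y * ExpN a b k (fix_at g k x y))).
Proof. reflexivity. Qed.

(* Absolute convergence of every iterated series in the definition of [ExpN]. *)
Fixpoint Integrable (k : nat) (g : Stat) : Prop :=
  match k with
  | O => True
  | S k' => (forall x y, Integrable k' (fix_at g k' x y)) /\
      (forall x, ex_series (fun y =>
         pmf2 k' x y * ExpN a b k' (fun X Y => Rabs (fix_at g k' x y X Y)))) /\
      ex_series (fun x => Series (fun y =>
         pmf2 k' x y * ExpN a b k' (fun X Y => Rabs (fix_at g k' x y X Y))))
  end.

Definition rates_nonneg (k : nat) := forall i, (i < k)%nat -> 0 <= a i /\ 0 <= b i.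

Lemma rates_nonneg_S k : rates_nonneg (S k) -> rates_nonneg k.
Proof. intros H i Hi; apply H; lia. Qed.

Lemma pmf2_nonneg k x y : rates_nonneg (S k) -> 0 <= pmf2 k x y.
Proof.
  intros H; destruct (H k) as [H1 H2]; [lia|]. unfold pmf2.
  apply Rmult_le_pos; apply pois_nonneg; auto.
Qed.

Lemma ExpN_ext k : forall g h : Stat, (forall X Y, g X Y = h X Y) -> ExpN a b k g = ExpN a b k h.
Proof.
  induction k as [|k IH]; intros g h H; simpl; auto.
  apply Series_ext; intros x; apply Series_ext; intros y. f_equal. apply IH.
  intros; apply H.
Qed.

Lemma Integrable_ext k : forall g h : Stat, (forall X Y, g X Y = h X Y) ->
  Integrable k g -> Integrable k h.
Proof.
  induction k as [|k IH]; intros g h H; simpl; auto.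
  intros [H1 [H2 H3]]. split; [|split].
  - intros x y; apply (IH (fix_at g k x y)); auto. intros; unfold fix_at; apply H.
  - intros x; eapply ex_series_ext; [|apply (H2 x)]. intros y; simpl.
    f_equal. apply ExpN_ext; intros; unfold fix_at; rewrite H; auto.
  - eapply ex_series_ext; [|apply H3]. intros x; simpl. apply Series_ext; intros y.
    f_equal. apply ExpN_ext; intros; unfold fix_at; rewrite H; auto.
Qed.

Lemma ExpN_nonneg k : rates_nonneg k ->
  forall g : Stat, (forall X Y, 0 <= g X Y) -> 0 <= ExpN a b k g.
Proof.
  induction k as [|k IH]; intros Hp g H; simpl; auto.
  apply Series_nonneg; intros x; apply Series_nonneg; intros y.
  apply Rmult_le_pos; [apply (pmf2_nonneg k x y Hp)|].
  apply IH; [apply rates_nonneg_S; auto|]. intros; apply H.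
Qed.

Lemma ExpN_scal k : forall (c : R) (g : Stat),
  ExpN a b k (fun X Y => c * g X Y) = c * ExpN a b k g.
Proof.
  induction k as [|k IH]; intros c g; simpl; auto.
  rewrite <- Series_scal_l. apply Series_ext; intros x.
  rewrite <- Series_scal_l. apply Series_ext; intros y.
  rewrite (IH c). ring.
Qed.

Lemma Series_pmf2_y k x c : Series (fun y => pmf2 k x y * c) = pois (a k) x * c.
Proof.
  unfold pmf2. transitivity (pois (a k) x * c * Series (pois (b k))).
  - rewrite <- Series_scal_l; apply Series_ext; intros; ring.
  - rewrite pois_Series; ring.
Qed.

Lemma ExpN_const k : forall c : R, ExpN a b k (fun _ _ => c) = c.
Proof.
  induction k as [|k IH]; intros c; simpl; auto.
  transitivity (Series (fun x => pois (a k) x * c)).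
  - apply Series_ext; intros x. rewrite <- Series_pmf2_y.
    apply Series_ext; intros y. unfold fix_at. rewrite IH; auto.
  - rewrite Series_scal_r, pois_Series; ring.
Qed.

Lemma Integrable_const k : forall c : R, Integrable k (fun _ _ => c).
Proof.
  induction k as [|k IH]; intros c; simpl; auto.
  unfold fix_at. split; [|split].
  - intros; exact (IH c).
  - intros x.
    eapply ex_series_ext; [|apply (ex_series_scal_l (pois (a k) x * Rabs c) _ (pois_ex (b k)))].
    intros y; simpl. rewrite ExpN_const. unfold pmf2, scal; simpl; unfold mult; simpl; ring.
  - eapply ex_series_ext; [|apply (ex_series_scal_l (Rabs c) _ (pois_ex (a k)))].
    intros x; simpl. unfold scal; simpl; unfold mult; simpl.
    rewrite (Series_ext _ (fun y => pmf2 k x y * Rabs c)) by (intros; rewrite ExpN_const; auto).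
    rewrite Series_pmf2_y; ring.
Qed.

Lemma ExpN_abs_scal k k' x y c (g : Stat) :
  ExpN a b k (fun X Y => Rabs (fix_at (fun X Y => c * g X Y) k' x y X Y)) =
  Rabs c * ExpN a b k (fun X Y => Rabs (fix_at g k' x y X Y)).
Proof. rewrite <- ExpN_scal. apply ExpN_ext; intros; unfold fix_at; apply Rabs_mult. Qed.

Lemma Integrable_scal k : forall (c : R) (g : Stat),
  Integrable k g -> Integrable k (fun X Y => c * g X Y).
Proof.
  induction k as [|k IH]; intros c g; auto.
  intros [H1 [H2 H3]]. split; [|split].
  - intros x y. apply (IH c (fix_at g k x y)). auto.
  - intros x. eapply ex_series_ext; [|apply (ex_series_scal_l (Rabs c) _ (H2 x))].
    intros y; cbv beta. rewrite ExpN_abs_scal. unfold scal; simpl; unfold mult; simpl; ring.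
  - eapply ex_series_ext; [|apply (ex_series_scal_l (Rabs c) _ H3)]. intros x; cbv beta.
    unfold scal; simpl; unfold mult; simpl.
    rewrite <- Series_scal_l. apply Series_ext; intros y. rewrite ExpN_abs_scal. ring.
Qed.

Lemma Integrable_abs k : forall g : Stat, Integrable k g -> Integrable k (fun X Y => Rabs (g X Y)).
Proof.
  induction k as [|k IH]; intros g; simpl; auto.
  intros [H1 [H2 H3]]. split; [|split].
  - intros x y. apply (IH (fix_at g k x y)); auto.
  - intros x. eapply ex_series_ext; [|apply (H2 x)]. intros y; simpl. f_equal.
    apply ExpN_ext; intros; unfold fix_at; rewrite Rabs_Rabsolu; auto.
  - eapply ex_series_ext; [|apply H3]. intros x; simpl. apply Series_ext; intros y. f_equal.
    apply ExpN_ext; intros; unfold fix_at; rewrite Rabs_Rabsolu; auto.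
Qed.

Definition additive k := forall g h : Stat, Integrable k g -> Integrable k h ->
  Integrable k (fun X Y => g X Y + h X Y) /\
  ExpN a b k (fun X Y => g X Y + h X Y) = ExpN a b k g + ExpN a b k h.

Lemma monotone_of_additive k : rates_nonneg k -> additive k ->
  forall g h : Stat, Integrable k g -> Integrable k h ->
  (forall X Y, g X Y <= h X Y) -> ExpN a b k g <= ExpN a b k h.
Proof.
  intros Hp Ha g h Hg Hh Hle.
  pose proof (Integrable_scal k (-1) g Hg) as Hng.
  destruct (Ha _ h Hng Hh) as [Id Ed].
  destruct (Ha g _ Hg Id) as [_ E].
  rewrite ExpN_scal in Ed.
  rewrite (ExpN_ext k (fun X Y => g X Y + (-1 * g X Y + h X Y)) h) in E by (intros; ring).
  assert (0 <= ExpN a b k (fun X Y => -1 * g X Y + h X Y)).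
  { apply ExpN_nonneg; auto. intros; specialize (Hle X Y); lra. }
  lra.
Qed.

Lemma abs_of_additive k : rates_nonneg k -> additive k -> forall g : Stat, Integrable k g ->
  Rabs (ExpN a b k g) <= ExpN a b k (fun X Y => Rabs (g X Y)).
Proof.
  intros Hp Ha g Hg. pose proof (Integrable_abs k g Hg) as Hga.
  apply Rabs_le; split.
  - pose proof (monotone_of_additive k Hp Ha (fun X Y => -1 * Rabs (g X Y)) g
      (Integrable_scal k (-1) _ Hga) Hg) as M.
    rewrite ExpN_scal in M.
    assert (HH : forall X Y : nat -> nat, -1 * Rabs (g X Y) <= g X Y).
    { intros X Y. pose proof (Rle_abs (- g X Y)). rewrite Rabs_Ropp in H. lra. }
    specialize (M HH). lra.
  - apply (monotone_of_additive k Hp Ha); auto. intros; apply Rle_abs.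
Qed.

Lemma inner_series_bound k : rates_nonneg (S k) ->
  (forall g, Integrable k g -> Rabs (ExpN a b k g) <= ExpN a b k (fun X Y => Rabs (g X Y))) ->
  forall g, Integrable (S k) g ->
  (forall x, ex_series (fun y => pmf2 k x y * ExpN a b k (fix_at g k x y))) /\
  ex_series (fun x => Series (fun y => pmf2 k x y * ExpN a b k (fix_at g k x y))).
Proof.
  intros Hp Habs g [G1 [G2 G3]].
  assert (B : forall x y, Rabs (pmf2 k x y * ExpN a b k (fix_at g k x y)) <=
     pmf2 k x y * ExpN a b k (fun X Y => Rabs (fix_at g k x y X Y))).
  { intros x y. rewrite Rabs_mult, (Rabs_pos_eq (pmf2 k x y)) by (apply pmf2_nonneg; auto).
    apply Rmult_le_compat_l; [apply pmf2_nonneg; auto|]. apply Habs; auto. }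
  assert (C : forall x, Rabs (Series (fun y => pmf2 k x y * ExpN a b k (fix_at g k x y))) <=
     Series (fun y => pmf2 k x y * ExpN a b k (fun X Y => Rabs (fix_at g k x y X Y)))).
  { intros x. eapply Rle_trans; [apply Series_Rabs|].
    - apply (ex_series_dom _ _ (fun y => Rle_trans _ _ _ (Req_le _ _ (Rabs_Rabsolu _)) (B x y)) (G2 x)).
    - apply Series_le; [|apply G2]. intros y; split; [apply Rabs_pos| apply B]. }
  split.
  - intros x. apply (ex_series_dom _ _ (B x) (G2 x)).
  - apply (ex_series_dom _ _ C G3).
Qed.

Lemma pmf2_ExpN_abs_nonneg k x y (g : Stat) : rates_nonneg (S k) ->
  0 <= pmf2 k x y * ExpN a b k (fun X Y => Rabs (g X Y)).
Proof.
  intros Hp. apply Rmult_le_pos; [apply pmf2_nonneg; auto|].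
  apply ExpN_nonneg; [apply rates_nonneg_S; auto|]. intros; apply Rabs_pos.
Qed.

Lemma outer_series_dom k (g : Stat) (B : nat -> nat -> R) : rates_nonneg (S k) ->
  (forall x y, pmf2 k x y * ExpN a b k (fun X Y => Rabs (fix_at g k x y X Y)) <= B x y) ->
  (forall x, ex_series (B x)) -> ex_series (fun x => Series (B x)) ->
  (forall x, ex_series (fun y => pmf2 k x y * ExpN a b k (fun X Y => Rabs (fix_at g k x y X Y)))) /\
  ex_series (fun x => Series (fun y => pmf2 k x y * ExpN a b k (fun X Y => Rabs (fix_at g k x y X Y)))).
Proof.
  intros Hp Hle HB1 HB2.
  assert (Ha : forall x y, Rabs (pmf2 k x y * ExpN a b k (fun X Y => Rabs (fix_at g k x y X Y))) <= B x y).
  { intros x y. rewrite Rabs_pos_eq by (apply pmf2_ExpN_abs_nonneg; auto). apply Hle. }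
  split.
  - intros x. apply (ex_series_dom _ _ (Ha x) (HB1 x)).
  - eapply ex_series_dom; [|apply HB2]. intros x.
    rewrite Rabs_pos_eq by (apply Series_nonneg; intros; apply pmf2_ExpN_abs_nonneg; auto).
    apply Series_le; [|apply HB1]. intros y; split; [apply pmf2_ExpN_abs_nonneg; auto|apply Hle].
Qed.

Lemma additive_S k : rates_nonneg (S k) -> additive k -> additive (S k).
Proof.
  intros Hp IH. pose proof (rates_nonneg_S k Hp) as Hk.
  pose proof (monotone_of_additive k Hk IH) as Mono.
  pose proof (abs_of_additive k Hk IH) as Absle.
  intros g h Hg Hh.
  destruct (inner_series_bound k Hp Absle g Hg) as [Ga Gb].
  destruct (inner_series_bound k Hp Absle h Hh) as [Ha Hb].
  destruct Hg as [G1 [G2 G3]]. destruct Hh as [H1 [H2 H3]].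
  assert (Isum : forall x y, Integrable k (fix_at (fun X Y => g X Y + h X Y) k x y)).
  { intros x y. apply (proj1 (IH _ _ (G1 x y) (H1 x y))). }
  assert (Tri : forall x y,
     pmf2 k x y * ExpN a b k (fun X Y => Rabs (fix_at (fun X Y => g X Y + h X Y) k x y X Y)) <=
     pmf2 k x y * ExpN a b k (fun X Y => Rabs (fix_at g k x y X Y)) +
     pmf2 k x y * ExpN a b k (fun X Y => Rabs (fix_at h k x y X Y))).
  { intros x y. rewrite <- Rmult_plus_distr_l.
    apply Rmult_le_compat_l; [apply pmf2_nonneg; auto|].
    destruct (IH _ _ (Integrable_abs k _ (G1 x y)) (Integrable_abs k _ (H1 x y))) as [I E].
    rewrite <- E. apply Mono; auto; [apply Integrable_abs; auto|].
    intros; unfold fix_at; apply Rabs_triang. }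
  split; [split; [exact Isum|]|].
  - apply (outer_series_dom k _ _ Hp Tri).
    + intros x. apply (ex_series_plus _ _ (G2 x) (H2 x)).
    + eapply ex_series_ext; [|apply (ex_series_plus _ _ G3 H3)].
      intros x; symmetry. apply Series_plus; auto.
  - rewrite !ExpN_S, <- Series_plus by auto. apply Series_ext; intros x.
    rewrite <- Series_plus by auto. apply Series_ext; intros y.
    rewrite <- Rmult_plus_distr_l. f_equal. apply (IH (fix_at g k x y) (fix_at h k x y)); auto.
Qed.

Lemma ExpN_additive k : rates_nonneg k -> additive k.
Proof.
  induction k as [|k IH]; intros Hp.
  - intros g h _ _. split; simpl; auto.
  - apply additive_S; auto. apply IH, rates_nonneg_S; auto.
Qed.

Lemma ExpN_mono k : rates_nonneg k -> forall g h : Stat, Integrable k g -> Integrable k h ->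
  (forall X Y, g X Y <= h X Y) -> ExpN a b k g <= ExpN a b k h.
Proof. intros Hp; apply monotone_of_additive, ExpN_additive; auto. Qed.

Lemma Integrable_dom k : rates_nonneg k -> forall g h : Stat, Integrable k h ->
  (forall X Y, Rabs (g X Y) <= h X Y) -> Integrable k g.
Proof.
  induction k as [|k IH]; intros Hp g h; simpl; auto.
  intros [H1 [H2 H3]] Hle. pose proof (rates_nonneg_S k Hp) as Hk.
  assert (Isub : forall x y, Integrable k (fix_at g k x y)).
  { intros x y. apply (IH Hk _ (fix_at h k x y)); auto. intros; apply Hle. }
  split; [exact Isub|].
  apply (outer_series_dom k _
    (fun x y => pmf2 k x y * ExpN a b k (fun X Y => Rabs (fix_at h k x y X Y))) Hp); auto.
  intros x y.
  apply Rmult_le_compat_l; [apply pmf2_nonneg; auto|].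
  apply ExpN_mono; auto; try (apply Integrable_abs; auto).
  intros X Y; unfold fix_at. eapply Rle_trans; [apply Hle|apply Rle_abs].
Qed.

Lemma ExpN_sumR k : rates_nonneg k -> forall (N : nat) (g : nat -> Stat),
  (forall i, (i < N)%nat -> Integrable k (g i)) ->
  Integrable k (fun X Y => sumR N (fun i => g i X Y)) /\
  ExpN a b k (fun X Y => sumR N (fun i => g i X Y)) = sumR N (fun i => ExpN a b k (g i)).
Proof.
  intros Hp N; induction N as [|N IH]; intros g Hg; simpl.
  - split; [apply Integrable_const|apply ExpN_const].
  - destruct (IH g) as [I E]; [intros; apply Hg; lia|].
    destruct (ExpN_additive k Hp _ (g N) I) as [I2 E2]; [apply Hg; lia|].
    split; auto. rewrite E2, E; auto.
Qed.

End ExpectationCalculus.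

Definition E2 (l u : R) (h : nat -> nat -> R) : R :=
  Series (fun x => Series (fun y => pois l x * pois u y * h x y)).
Definition I2 (l u : R) (h : nat -> nat -> R) : Prop :=
  (forall x, ex_series (fun y => pois l x * pois u y * Rabs (h x y))) /\
  ex_series (fun x => Series (fun y => pois l x * pois u y * Rabs (h x y))).

Lemma I2_ext l u h g : (forall x y, h x y = g x y) -> I2 l u h -> I2 l u g.
Proof.
  intros H [A B]; split.
  - intros x; eapply ex_series_ext; [|apply (A x)]; intros; simpl; rewrite H; auto.
  - eapply ex_series_ext; [|apply B]; intros; simpl; apply Series_ext; intros; rewrite H; auto.
Qed.

Lemma E2_ext l u h g : (forall x y, h x y = g x y) -> E2 l u h = E2 l u g.
Proof. intros H; unfold E2; apply Series_ext; intros; apply Series_ext; intros; rewrite H; auto. Qed.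

Lemma E2_scal l u c h : E2 l u (fun x y => c * h x y) = c * E2 l u h.
Proof.
  unfold E2. rewrite <- Series_scal_l. apply Series_ext; intros x.
  rewrite <- Series_scal_l. apply Series_ext; intros y. ring.
Qed.

Lemma E2_as_ExpN l u h : E2 l u h = ExpN (fun _ => l) (fun _ => u) 1 (fun X Y => h (X O) (Y O)).
Proof. reflexivity. Qed.

Lemma I2_as_Integrable l u h :
  I2 l u h <-> Integrable (fun _ => l) (fun _ => u) 1 (fun X Y => h (X O) (Y O)).
Proof.
  unfold I2; simpl. split.
  - intros [A B]; split; [|split]; auto.
  - intros [_ [A B]]; split; auto.
Qed.

Section Marginals.
Variables a b : nat -> R.

Lemma ExpN_S_drop k (g g' : Stat) :
  (forall x y, fix_at g k x y = g') -> Integrable a b k g' ->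
  Integrable a b (S k) g /\ ExpN a b (S k) g = ExpN a b k g'.
Proof.
  intros Es I. set (c := ExpN a b k (fun X Y => Rabs (g' X Y))).
  split; [split; [|split]|].
  - intros x y; rewrite Es; auto.
  - intros x. eapply ex_series_ext; [|apply (ex_series_scal_l (pois (a k) x * c) _ (pois_ex (b k)))].
    intros y; rewrite Es; unfold pmf2, scal; simpl; unfold mult; simpl; fold c; ring.
  - eapply ex_series_ext; [|apply (ex_series_scal_l c _ (pois_ex (a k)))].
    intros x. unfold scal; simpl; unfold mult; simpl.
    rewrite (Series_ext _ (fun y => pmf2 a b k x y * c)), Series_pmf2_y by (intros y; rewrite Es; auto).
    ring.
  - rewrite ExpN_S. transitivity (Series (fun x => pois (a k) x * ExpN a b k g')).
    + apply Series_ext; intros x. rewrite <- (Series_pmf2_y a b). apply Series_ext; intros y.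
      rewrite Es; auto.
    + rewrite Series_scal_r, pois_Series; ring.
Qed.

Lemma ExpN_S_factor k (g g' : Stat) (h : nat -> nat -> R) :
  (forall x y, fix_at g k x y = fun X Y => h x y * g' X Y) ->
  I2 (a k) (b k) h -> Integrable a b k g' ->
  Integrable a b (S k) g /\ ExpN a b (S k) g = E2 (a k) (b k) h * ExpN a b k g'.
Proof.
  intros Es [H1 H2] I. set (c := ExpN a b k (fun X Y => Rabs (g' X Y))).
  assert (Ea : forall x y, ExpN a b k (fun X Y => Rabs (fix_at g k x y X Y)) = Rabs (h x y) * c).
  { intros x y. rewrite Es. unfold c. rewrite <- ExpN_scal.
    apply ExpN_ext; intros; apply Rabs_mult. }
  split; [split; [|split]|].
  - intros x y; rewrite Es. apply Integrable_scal; auto.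
  - intros x. eapply ex_series_ext; [|apply (ex_series_scal_l c _ (H1 x))].
    intros y; cbv beta. rewrite Ea; unfold pmf2, scal; simpl; unfold mult; simpl; ring.
  - eapply ex_series_ext; [|apply (ex_series_scal_l c _ H2)].
    intros x; cbv beta. unfold scal; simpl; unfold mult; simpl.
    rewrite <- Series_scal_l. apply Series_ext; intros y. rewrite Ea; unfold pmf2; ring.
  - rewrite ExpN_S. unfold E2 at 1. rewrite Rmult_comm, <- Series_scal_l. apply Series_ext; intros x.
    rewrite <- Series_scal_l. apply Series_ext; intros y.
    rewrite Es, ExpN_scal. unfold pmf2; ring.
Qed.

Lemma ExpN_coord k i h : (i < k)%nat -> I2 (a i) (b i) h ->
  Integrable a b k (fun X Y => h (X i) (Y i)) /\
  ExpN a b k (fun X Y => h (X i) (Y i)) = E2 (a i) (b i) h.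
Proof.
  revert i; induction k as [|k IH]; intros i Hi Hh; [lia|].
  destruct (Nat.eq_dec i k) as [->|Hne].
  - destruct (ExpN_S_factor k (fun X Y => h (X k) (Y k)) (fun _ _ => 1) h) as [I E];
      auto; [|apply Integrable_const|].
    + intros x y; unfold fix_at. apply functional_extensionality; intros X.
      apply functional_extensionality; intros Y. rewrite !upd_eq; ring.
    + split; auto. rewrite E, ExpN_const; ring.
  - destruct (IH i ltac:(lia) Hh) as [I E].
    destruct (ExpN_S_drop k (fun X Y => h (X i) (Y i)) (fun X Y => h (X i) (Y i))) as [I' E'];
      auto.
    + intros x y; unfold fix_at. apply functional_extensionality; intros X.
      apply functional_extensionality; intros Y. rewrite !upd_neq; auto.
    + split; auto. rewrite E', E; auto.
Qed.

Lemma ExpN_coord2 k i j h g : (i < k)%nat -> (j < k)%nat -> i <> j ->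
  I2 (a i) (b i) h -> I2 (a j) (b j) g ->
  Integrable a b k (fun X Y => h (X i) (Y i) * g (X j) (Y j)) /\
  ExpN a b k (fun X Y => h (X i) (Y i) * g (X j) (Y j)) = E2 (a i) (b i) h * E2 (a j) (b j) g.
Proof.
  revert i j h g; induction k as [|k IH]; intros i j h g Hi Hj Hij Hh Hg; [lia|].
  assert (Top : forall j' h' g', (j' < k)%nat -> I2 (a k) (b k) h' -> I2 (a j') (b j') g' ->
    Integrable a b (S k) (fun X Y => h' (X k) (Y k) * g' (X j') (Y j')) /\
    ExpN a b (S k) (fun X Y => h' (X k) (Y k) * g' (X j') (Y j')) =
      E2 (a k) (b k) h' * E2 (a j') (b j') g').
  { intros j' h' g' Hj' Hh' Hg'.
    destruct (ExpN_coord k j' g' Hj' Hg') as [Ig Eg].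
    rewrite <- Eg. apply ExpN_S_factor; auto.
    intros x y; unfold fix_at. apply functional_extensionality; intros X.
    apply functional_extensionality; intros Y. rewrite !upd_eq, !upd_neq by lia; auto. }
  destruct (Nat.eq_dec i k) as [->|Hi']; [apply Top; auto; lia|].
  destruct (Nat.eq_dec j k) as [->|Hj'].
  - destruct (Top i g h) as [I E]; auto; [lia|]. split.
    + eapply Integrable_ext; [|exact I]. intros; simpl; ring.
    + rewrite Rmult_comm, <- E. apply ExpN_ext; intros; ring.
  - destruct (IH i j h g) as [I E]; auto; try lia.
    rewrite <- E. apply ExpN_S_drop; auto.
    intros x y; unfold fix_at. apply functional_extensionality; intros X.
    apply functional_extensionality; intros Y. rewrite !upd_neq by lia; auto.
Qed.

Lemma ExpN_coord_sum k N (h : nat -> nat -> nat -> R) : rates_nonneg a b k -> (N <= k)%nat ->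
  (forall i, (i < N)%nat -> I2 (a i) (b i) (h i)) ->
  Integrable a b k (fun X Y => sumR N (fun i => h i (X i) (Y i))) /\
  ExpN a b k (fun X Y => sumR N (fun i => h i (X i) (Y i))) = sumR N (fun i => E2 (a i) (b i) (h i)).
Proof.
  intros Hp HN Hh.
  destruct (ExpN_sumR a b k Hp N (fun i X Y => h i (X i) (Y i))) as [I E].
  { intros i Hi. apply (ExpN_coord k i (h i)); auto; lia. }
  split; auto. rewrite E. apply sumR_ext; intros i Hi. apply (ExpN_coord k i (h i)); auto; lia.
Qed.

End Marginals.

Lemma rates_nonneg_pair l u : 0 <= l -> 0 <= u -> rates_nonneg (fun _ => l) (fun _ => u) 1.
Proof. intros Hl Hu i _; auto. Qed.

Lemma E2_lin l u c h1 h2 : 0 <= l -> 0 <= u -> I2 l u h1 -> I2 l u h2 ->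
  I2 l u (fun x y => c * h1 x y + h2 x y) /\
  E2 l u (fun x y => c * h1 x y + h2 x y) = c * E2 l u h1 + E2 l u h2.
Proof.
  intros Hl Hu H1 H2. apply I2_as_Integrable in H1. apply I2_as_Integrable in H2.
  pose proof (Integrable_scal _ _ 1 c _ H1) as H3.
  destruct (ExpN_additive _ _ 1 (rates_nonneg_pair l u Hl Hu) _ _ H3 H2) as [I E].
  split; [apply I2_as_Integrable; exact I|].
  rewrite !E2_as_ExpN, <- ExpN_scal. exact E.
Qed.

Lemma E2_mono l u h1 h2 : 0 <= l -> 0 <= u -> I2 l u h1 -> I2 l u h2 ->
  (forall x y, h1 x y <= h2 x y) -> E2 l u h1 <= E2 l u h2.
Proof.
  intros Hl Hu H1 H2 Hle. apply I2_as_Integrable in H1. apply I2_as_Integrable in H2.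
  rewrite !E2_as_ExpN. apply (ExpN_mono _ _ 1 (rates_nonneg_pair l u Hl Hu)); auto.
Qed.

Lemma I2_dom l u g h : 0 <= l -> 0 <= u -> I2 l u h ->
  (forall x y, Rabs (g x y) <= h x y) -> I2 l u g.
Proof.
  intros Hl Hu H Hle. apply I2_as_Integrable in H. apply I2_as_Integrable.
  apply (Integrable_dom _ _ 1 (rates_nonneg_pair l u Hl Hu) _ _ H); auto.
Qed.

Lemma I2_const l u c : I2 l u (fun _ _ => c).
Proof. apply I2_as_Integrable, (Integrable_const _ _ 1 c). Qed.

Lemma E2_const l u c : E2 l u (fun _ _ => c) = c.
Proof. rewrite E2_as_ExpN. apply ExpN_const. Qed.

Lemma I2_scal l u c h : 0 <= l -> 0 <= u -> I2 l u h -> I2 l u (fun x y => c * h x y).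
Proof.
  intros Hl Hu H. destruct (E2_lin l u c h (fun _ _ => 0) Hl Hu H (I2_const l u 0)) as [I _].
  eapply I2_ext; [|exact I]. intros; simpl; ring.
Qed.

Lemma E2_prod l u (f g : nat -> R) :
  PoiInt l (fun k => Rabs (f k)) -> PoiInt u (fun k => Rabs (g k)) ->
  I2 l u (fun x y => f x * g y) /\ E2 l u (fun x y => f x * g y) = PoiE l f * PoiE u g.
Proof.
  unfold PoiInt, PoiE, I2, E2. intros Hf Hg.
  assert (Inner : forall (F G : nat -> R) x,
    Series (fun y => pois l x * pois u y * (F x * G y)) = pois l x * F x * Series (fun y => pois u y * G y)).
  { intros F G x. rewrite <- Series_scal_l. apply Series_ext; intros; ring. }
  split; [split|].
  - intros x. eapply ex_series_ext; [|apply (ex_series_scal_l (pois l x * Rabs (f x)) _ Hg)].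
    intros y; unfold scal; simpl; unfold mult; simpl. rewrite Rabs_mult; ring.
  - eapply ex_series_ext; [|apply (ex_series_scal_l (Series (fun y => pois u y * Rabs (g y))) _ Hf)].
    intros x; unfold scal; simpl; unfold mult; simpl.
    rewrite (Series_ext (fun y => pois l x * pois u y * Rabs (f x * g y))
                        (fun y => pois l x * pois u y * (Rabs (f x) * Rabs (g y))))
      by (intros; rewrite Rabs_mult; auto).
    rewrite (Inner (fun k => Rabs (f k)) (fun k => Rabs (g k))); ring.
  - rewrite (Series_ext _ (fun x => Series (fun y => pois u y * g y) * (pois l x * f x)))
      by (intros x; rewrite (Inner f g); ring).
    rewrite Series_scal_l; ring.
Qed.

Lemma PoiE_falling_comb l N (c : nat -> R) :
  PoiInt l (fun k => sumR N (fun j => c j * falling (INR k) j)) /\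
  PoiE l (fun k => sumR N (fun j => c j * falling (INR k) j)) = sumR N (fun j => c j * l ^ j).
Proof.
  induction N as [|N [IHi IHe]]; simpl.
  - unfold PoiInt, PoiE. split.
    + eapply ex_series_ext; [|apply (ex_series_scal_l 0 _ (pois_ex l))].
      intros; unfold scal; simpl; unfold mult; simpl; ring.
    + transitivity (0 * Series (pois l)); [rewrite <- Series_scal_l; apply Series_ext; intros|]; ring.
  - destruct (PoiE_falling l N) as [Fi Fe].
    destruct (PoiE_lin l (c N) _ _ Fi IHi) as [I E].
    split; [eapply PoiInt_ext; [|exact I]; intros; simpl; ring|].
    rewrite (PoiE_ext l _ (fun k => c N * falling (INR k) N +
                                     sumR N (fun j => c j * falling (INR k) j))) by (intros; ring).
    rewrite E, Fe, IHe; ring.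
Qed.

(* Since falling factorials of naturals are nonnegative, such combinations are
   absolutely integrable. *)
Lemma PoiInt_abs_falling_comb l N (c : nat -> R) : 0 <= l ->
  PoiInt l (fun k => Rabs (sumR N (fun j => c j * falling (INR k) j))).
Proof.
  intros Hl. destruct (PoiE_falling_comb l N (fun j => Rabs (c j))) as [I _].
  unfold PoiInt in *. eapply ex_series_dom; [|exact I]. intros k.
  rewrite Rabs_mult, Rabs_Rabsolu, (Rabs_pos_eq (pois l k)) by (apply pois_nonneg; auto).
  apply Rmult_le_compat_l; [apply pois_nonneg; auto|].
  eapply Rle_trans; [apply sumR_abs|]. apply sumR_le; intros j _. cbv beta.
  rewrite Rabs_mult, (Rabs_pos_eq (falling _ _)) by apply falling_nat_nonneg. lra.
Qed.

(* Polynomials of degree at most four, and their expectations under Poi(l). *)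
Definition poly4 (c0 c1 c2 c3 c4 x : R) : R := c0 + c1 * x + c2 * x^2 + c3 * x^3 + c4 * x^4.
Definition poimom4 (l c0 c1 c2 c3 c4 : R) : R :=
  c0 + c1 * l + c2 * (l^2 + l) + c3 * (l^3 + 3*l^2 + l) + c4 * (l^4 + 6*l^3 + 7*l^2 + l).

(* Change of basis from monomials to falling factorials. *)
Definition poly4_coef (c0 c1 c2 c3 c4 : R) (j : nat) : R :=
  match j with
  | O => c0 | 1 => c1 + c2 + c3 + c4 | 2 => c2 + 3 * c3 + 7 * c4 | 3 => c3 + 6 * c4 | _ => c4
  end.

Lemma poly4_falling c0 c1 c2 c3 c4 x :
  poly4 c0 c1 c2 c3 c4 x = sumR 5 (fun j => poly4_coef c0 c1 c2 c3 c4 j * falling x j).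
Proof. unfold poly4; simpl; ring. Qed.

Lemma PoiE_poly4 l c0 c1 c2 c3 c4 : 0 <= l ->
  PoiInt l (fun k => Rabs (poly4 c0 c1 c2 c3 c4 (INR k))) /\
  PoiE l (fun k => poly4 c0 c1 c2 c3 c4 (INR k)) = poimom4 l c0 c1 c2 c3 c4.
Proof.
  intros Hl. split.
  - eapply PoiInt_ext; [|apply (PoiInt_abs_falling_comb l 5 (poly4_coef c0 c1 c2 c3 c4) Hl)].
    intros k; rewrite poly4_falling; auto.
  - rewrite (PoiE_ext l _ _ (fun k => poly4_falling c0 c1 c2 c3 c4 (INR k))).
    rewrite (proj2 (PoiE_falling_comb l 5 (poly4_coef c0 c1 c2 c3 c4))). unfold poimom4; simpl; ring.
Qed.

Lemma E2_poly4_prod l u c0 c1 c2 c3 c4 d0 d1 d2 d3 d4 : 0 <= l -> 0 <= u ->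
  I2 l u (fun x y => poly4 c0 c1 c2 c3 c4 (INR x) * poly4 d0 d1 d2 d3 d4 (INR y)) /\
  E2 l u (fun x y => poly4 c0 c1 c2 c3 c4 (INR x) * poly4 d0 d1 d2 d3 d4 (INR y)) =
    poimom4 l c0 c1 c2 c3 c4 * poimom4 u d0 d1 d2 d3 d4.
Proof.
  intros Hl Hu.
  destruct (PoiE_poly4 l c0 c1 c2 c3 c4 Hl) as [Ic Ec].
  destruct (PoiE_poly4 u d0 d1 d2 d3 d4 Hu) as [Id Ed].
  rewrite <- Ec, <- Ed. apply E2_prod; auto.
Qed.

(** The summands Z_i and their second moments. *)

Definition Zpair (x y : nat) : R := (INR x - INR y)^2 - INR x - INR y.

Lemma E2_Zpair l u : 0 <= l -> 0 <= u -> I2 l u Zpair /\ E2 l u Zpair = (l - u)^2.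
Proof.
  intros Hl Hu.
  destruct (E2_poly4_prod l u 0 (-1) 1 0 0 1 0 0 0 0 Hl Hu) as [Ix Ex].
  destruct (E2_poly4_prod l u 1 0 0 0 0 0 (-1) 1 0 0 Hl Hu) as [Iy Ey].
  destruct (E2_poly4_prod l u 0 1 0 0 0 0 1 0 0 0 Hl Hu) as [Ixy Exy].
  destruct (E2_lin l u (-2) _ _ Hl Hu Ixy Iy) as [I1 E1].
  destruct (E2_lin l u 1 _ _ Hl Hu Ix I1) as [I2' E2'].
  assert (Eq : forall x y,
    1 * (poly4 0 (-1) 1 0 0 (INR x) * poly4 1 0 0 0 0 (INR y)) +
    (-2 * (poly4 0 1 0 0 0 (INR x) * poly4 0 1 0 0 0 (INR y)) +
     poly4 1 0 0 0 0 (INR x) * poly4 0 (-1) 1 0 0 (INR y)) = Zpair x y).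
  { intros; unfold Zpair, poly4; ring. }
  split; [eapply I2_ext; [exact Eq|exact I2']|].
  rewrite <- (E2_ext l u _ _ Eq), E2', E1, Ex, Ey, Exy. unfold poimom4; ring.
Qed.

(* Quartic envelopes in the centered counts x - l, y - u: all the pointwise
   bounds below are of this shape, and their expectations are explicit. *)
Definition env (l u al ka be ga de ep x y : R) : R :=
  al + ka * (x + y) + be * (x - l)^2 + ga * (y - u)^2 + de * (x - l)^4 + ep * (y - u)^4.

Lemma E2_env l u al ka be ga de ep : 0 <= l -> 0 <= u ->
  I2 l u (fun x y => env l u al ka be ga de ep (INR x) (INR y)) /\
  E2 l u (fun x y => env l u al ka be ga de ep (INR x) (INR y)) =
    al + ka * (l + u) + be * l + ga * u + de * (l + 3 * l^2) + ep * (u + 3 * u^2).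
Proof.
  intros Hl Hu.
  destruct (E2_poly4_prod l u (al + be * l^2 + de * l^4) (ka - 2 * be * l - 4 * de * l^3)
     (be + 6 * de * l^2) (-4 * de * l) de 1 0 0 0 0 Hl Hu) as [Ix Ex].
  destruct (E2_poly4_prod l u 1 0 0 0 0 (ga * u^2 + ep * u^4) (ka - 2 * ga * u - 4 * ep * u^3)
     (ga + 6 * ep * u^2) (-4 * ep * u) ep Hl Hu) as [Iy Ey].
  destruct (E2_lin l u 1 _ _ Hl Hu Ix Iy) as [I E].
  assert (Eq : forall x y,
    1 * (poly4 (al + be * l^2 + de * l^4) (ka - 2 * be * l - 4 * de * l^3) (be + 6 * de * l^2)
           (-4 * de * l) de (INR x) * poly4 1 0 0 0 0 (INR y)) +
    poly4 1 0 0 0 0 (INR x) * poly4 (ga * u^2 + ep * u^4) (ka - 2 * ga * u - 4 * ep * u^3)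
           (ga + 6 * ep * u^2) (-4 * ep * u) ep (INR y) = env l u al ka be ga de ep (INR x) (INR y)).
  { intros; unfold env, poly4; ring. }
  split; [eapply I2_ext; [exact Eq|exact I]|].
  rewrite <- (E2_ext l u _ _ Eq), E, Ex, Ey. unfold poimom4; ring.
Qed.

Lemma env_nonneg l u al ka be ga de ep x y : 0 <= x -> 0 <= y ->
  0 <= al -> 0 <= ka -> 0 <= be -> 0 <= ga -> 0 <= de -> 0 <= ep ->
  0 <= env l u al ka be ga de ep x y.
Proof.
  intros. unfold env.
  pose proof (pow2_ge_0 (x - l)). pose proof (pow2_ge_0 (y - u)).
  pose proof (pow4_nonneg (x - l)). pose proof (pow4_nonneg (y - u)).
  repeat apply Rplus_le_le_0_compat; try apply Rmult_le_pos; lra.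
Qed.

Lemma Zpair_centered_sqr_le (l u : R) (x y : nat) :
  (Zpair x y - (l - u)^2)^2 <=
  env l u (6 * (l + u)^2) 0 (24 * (l - u)^2 + 6) (24 * (l - u)^2 + 6) 48 48 (INR x) (INR y).
Proof.
  unfold Zpair, env. set (A := INR x - l). set (B := INR y - u).
  set (v := A - B). set (w := A + B). set (S := l + u). set (D := l - u).
  replace ((INR x - INR y)^2 - INR x - INR y - D^2)
    with ((v^2 - S) + 2 * D * v - w) by (unfold v, w, A, B, S, D; ring).
  assert (T1 : (v^2 - S + 2 * D * v - w)^2 <= 3 * ((v^2 - S)^2 + (2 * D * v)^2 + w^2)).
  { pose proof (pow2_ge_0 (v^2 - S - 2 * D * v)). pose proof (pow2_ge_0 (v^2 - S + w)).
    pose proof (pow2_ge_0 (2 * D * v + w)). nra. }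
  assert (T2 : (v^2 - S)^2 <= 2 * v^4 + 2 * S^2) by (pose proof (pow2_ge_0 (v^2 + S)); nra).
  assert (T3 : v^4 <= 8 * A^4 + 8 * B^4).
  { unfold v. replace (A - B) with (A + - B) by ring. replace (B^4) with ((-B)^4) by ring.
    apply pow4_add_le. }
  pose proof (sqr_sub_le A B) as T4. pose proof (sqr_add_le A B) as T5.
  fold v in T4; fold w in T5.
  assert (T6 : (2 * D * v)^2 = 4 * D^2 * v^2) by ring.
  assert (T7 : 0 <= D^2) by apply pow2_ge_0.
  assert (T8 : D^2 * v^2 <= D^2 * (2 * A^2 + 2 * B^2)) by (apply Rmult_le_compat_l; auto).
  nra.
Qed.

(** Pointwise bounds in terms of the normalizer.

   Throughout, x, y >= 0 are the first-sample counts of a symbol, l, u >= 0 the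
   Poisson rates of the second sample, r = sqrt(m/n), and f >= 1 the normalizer,
   which satisfies |x - y| <= r f and x + y <= r^2 f.  Write S = l + u,
   D = l - u, and A = x - l, B = y - u for the centered counts. *)

Section PointwiseBounds.
Variables (x y l u r f : R).
Hypotheses (Hx : 0 <= x) (Hy : 0 <= y) (Hl : 0 <= l) (Hu : 0 <= u) (Hr : 0 < r)
  (Hf1 : 1 <= f) (Hf2 : Rabs (x - y) <= r * f) (Hf3 : x + y <= r^2 * f).

(* Either the observed mass x + y is at least S/2, so that S <= 2 r^2 f, or it
   is smaller, and then the centered sum A + B is at least S/2 in absolute value. *)
Lemma mass_dichotomy : 0 < l + u ->
  l + u <= 2 * r^2 * f \/
  ((l + u)^2 <= 4 * ((x - l) + (y - u))^2 /\ (l + u)^4 <= 16 * ((x - l) + (y - u))^4).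
Proof.
  intros HS. destruct (Rle_or_lt ((l + u) / 2) (x + y)) as [Hs|Hs]; [left; lra|right].
  set (w := (x - l) + (y - u)).
  assert (Hw : 0 <= (l + u) / 2 <= - w) by (unfold w; lra).
  replace (w^2) with ((- w)^2) by ring. replace (w^4) with ((- w)^4) by ring.
  assert (H2 : ((l + u) / 2)^2 <= (- w)^2) by (apply pow_incr; lra).
  assert (H4 : ((l + u) / 2)^4 <= (- w)^4) by (apply pow_incr; lra).
  split; lra.
Qed.

(* Either the centered difference A - B is at least |D|/2 in absolute value, or
   the observed difference is, and then |D| < 2 r f. *)
Lemma gap_dichotomy : (l - u)^2 <= 4 * ((x - l) - (y - u))^2 \/ Rabs (l - u) < 2 * (r * f).
Proof.
  set (v := (x - l) - (y - u)).
  destruct (Rle_or_lt (Rabs (l - u) / 2) (Rabs v)) as [Hc|Hc]; [left|right].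
  - rewrite <- (pow2_abs (l - u)), <- (pow2_abs v). pose proof (Rabs_pos (l - u)). nra.
  - assert (T : Rabs (l - u) <= Rabs (x - y) + Rabs v).
    { replace (l - u) with ((x - y) + - v) by (unfold v; ring).
      eapply Rle_trans; [apply Rabs_triang|]. rewrite Rabs_Ropp; lra. }
    lra.
Qed.

Lemma gap_sqr_le_mass_sqr : (l - u)^2 <= (l + u)^2.
Proof. nra. Qed.

Lemma abs_over_r_le (t : R) : Rabs t / r <= (t^2 / r^2 + 1) / 2.
Proof.
  apply div_le_of_le_mul; [lra|].
  replace (((t ^ 2 / r ^ 2 + 1) / 2) * r) with ((t^2 + r^2) / (2 * r)) by (field; lra).
  apply le_div_of_mul_le; [lra|]. rewrite <- (pow2_abs t).
  pose proof (Rabs_pos t). pose proof (pow2_ge_0 (Rabs t - r)). nra.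
Qed.

(* The normalizer itself is bounded by an envelope of expectation O(1 + |D|/r + S/r^2). *)
Lemma normalizer_le_env : f <= 1 + Rabs (x - y) / r + (x + y) / r^2 ->
  f <= env l u (3/2 + Rabs (l - u) / r) (/ r^2) (/ r^2) (/ r^2) 0 0 x y.
Proof.
  intros Hf. unfold env. eapply Rle_trans; [exact Hf|].
  set (v := (x - l) - (y - u)).
  assert (Hr2 : 0 < r^2) by nra.
  assert (T1 : Rabs (x - y) / r <= Rabs (l - u) / r + Rabs v / r).
  { unfold Rdiv; rewrite <- Rmult_plus_distr_r.
    apply Rmult_le_compat_r; [left; apply Rinv_0_lt_compat; auto|].
    replace (x - y) with ((l - u) + v) by (unfold v; ring). apply Rabs_triang. }
  pose proof (abs_over_r_le v) as T2.
  assert (T3 : v^2 / r^2 <= 2 * ((x - l)^2 * / r^2) + 2 * ((y - u)^2 * / r^2)).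
  { unfold Rdiv. replace (2 * ((x - l)^2 * / r^2) + 2 * ((y - u)^2 * / r^2))
      with ((2 * (x - l)^2 + 2 * (y - u)^2) * / r^2) by ring.
    apply Rmult_le_compat_r; [left; apply Rinv_0_lt_compat; auto|]. apply sqr_sub_le. }
  assert (T4 : (x + y) / r^2 = / r^2 * (x + y)) by (unfold Rdiv; ring).
  lra.
Qed.

(* Three envelopes for the mean term D^2 / f, adapted to the size of |D|. *)
Lemma gap_term_le_env_small : (l - u)^2 / f <= env l u ((l - u)^2) 0 0 0 0 0 x y.
Proof.
  unfold env. apply div_le_of_le_mul; [lra|]. pose proof (pow2_ge_0 (l - u)). nra.
Qed.

Lemma gap_term_le_env_mid : r < Rabs (l - u) -> r * Rabs (l - u) <= l + u ->
  (l - u)^2 / f <=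
  env l u (2 * r^2 * (l - u)^2 / (l + u)) 0 0 0 (128 / (l + u)^2) (128 / (l + u)^2) x y.
Proof.
  intros HD HS.
  assert (HS0 : 0 < l + u) by (pose proof (Rabs_pos (l - u)); nra).
  pose proof (mass_dichotomy HS0) as Hmass.
  set (S := l + u) in *. set (D := l - u) in *.
  assert (HS2 : 0 < S^2) by nra.
  pose proof (pow4_nonneg (x - l)). pose proof (pow4_nonneg (y - u)).
  assert (P1 : 0 <= 128 / S^2) by (apply Rdiv_le_0_compat; lra).
  assert (P2 : 0 <= 2 * r ^ 2 * D ^ 2 / S) by (apply Rdiv_le_0_compat; [nra|lra]).
  unfold env.
  replace (2 * r ^ 2 * D ^ 2 / S + 0 * (x + y) + 0 * (x - l)^2 + 0 * (y - u)^2 +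
           128 / S^2 * (x - l)^4 + 128 / S^2 * (y - u)^4)
    with (2 * r ^ 2 * D ^ 2 / S + 128 / S^2 * ((x - l)^4 + (y - u)^4)) by ring.
  assert (0 <= 128 / S^2 * ((x - l)^4 + (y - u)^4)) by (apply Rmult_le_pos; lra).
  destruct Hmass as [Hs|[_ W]].
  - enough (D^2 / f <= 2 * r^2 * D^2 / S) by lra.
    apply div_le_of_le_mul; [lra|].
    replace (2 * r ^ 2 * D ^ 2 / S * f) with (D^2 * ((2 * r^2 * f) / S)) by (field; lra).
    assert (1 <= (2 * r^2 * f) / S) by (apply le_div_of_mul_le; lra).
    pose proof (pow2_ge_0 D). nra.
  - pose proof (pow4_add_le (x - l) (y - u)).
    assert (K : S^2 <= 128 / S^2 * ((x - l)^4 + (y - u)^4)).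
    { replace (128 / S ^ 2 * ((x - l) ^ 4 + (y - u) ^ 4))
        with (16 * (8 * (x - l) ^ 4 + 8 * (y - u) ^ 4) / S^2) by (field; lra).
      apply le_div_of_mul_le; [lra|]. replace (S^2 * S^2) with (S^4) by ring. lra. }
    assert (D^2 <= S^2) by (apply gap_sqr_le_mass_sqr).
    assert (D^2 / f <= D^2) by (apply div_le_of_le_mul; nra).
    lra.
Qed.

Lemma gap_term_le_env_large : r < Rabs (l - u) ->
  (l - u)^2 / f <= env l u (2 * r * Rabs (l - u)) 0 8 8 0 0 x y.
Proof.
  intros HD. pose proof gap_dichotomy as Hgap. set (D := l - u) in *.
  assert (HDa : D^2 = Rabs D ^ 2) by (rewrite pow2_abs; auto).
  pose proof (Rabs_pos D).
  unfold env.
  replace (2 * r * Rabs D + 0 * (x + y) + 8 * (x - l) ^ 2 + 8 * (y - u) ^ 2 +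
           0 * (x - l) ^ 4 + 0 * (y - u) ^ 4)
    with (2 * r * Rabs D + 4 * (2 * (x - l) ^ 2 + 2 * (y - u) ^ 2)) by ring.
  pose proof (sqr_sub_le (x - l) (y - u)) as Q.
  pose proof (pow2_ge_0 ((x - l) - (y - u))).
  destruct Hgap as [Hc|Hc].
  - assert (D^2 / f <= D^2) by (apply div_le_of_le_mul; nra). nra.
  - assert (D^2 / f <= 2 * r * Rabs D) by (apply div_le_of_le_mul; [lra|]; rewrite HDa; nra).
    nra.
Qed.

Lemma mass_sqr_term_le : 0 < l + u ->
  150 * (l + u)^2 / f^2 <= 600 * r^4 + 1200 * ((x - l)^2 + (y - u)^2).
Proof.
  intros HS0. assert (Hf : 1 <= f^2) by nra.
  pose proof (pow2_ge_0 (x - l)). pose proof (pow2_ge_0 (y - u)).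
  apply div_le_of_le_mul; [lra|].
  destruct (mass_dichotomy HS0) as [Hs|[W _]].
  - assert ((l + u)^2 <= (2 * r^2 * f)^2) by (apply pow_incr; lra). nra.
  - pose proof (sqr_add_le (x - l) (y - u)). nra.
Qed.

Lemma gap_mass_term_le : 0 < l + u ->
  24 * (l - u)^2 * (l + u) / f^2 <=
  96 * (l + u) * r^2 + 3072 / (l + u) * ((x - l)^4 + (y - u)^4) +
  768 * r^4 / (l + u) * ((x - l)^2 + (y - u)^2).
Proof.
  intros HS0. pose proof (mass_dichotomy HS0) as Hmass. pose proof gap_dichotomy as Hgap.
  set (S := l + u) in *. set (D := l - u) in *.
  assert (Hf : 1 <= f^2) by nra.
  pose proof (pow2_ge_0 (x - l)). pose proof (pow2_ge_0 (y - u)).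
  pose proof (pow4_nonneg (x - l)). pose proof (pow4_nonneg (y - u)).
  assert (N1 : 0 <= 3072 / S * ((x - l)^4 + (y - u)^4))
    by (apply Rmult_le_pos; [apply Rdiv_le_0_compat|]; lra).
  assert (N2 : 0 <= 768 * r^4 / S * ((x - l)^2 + (y - u)^2))
    by (apply Rmult_le_pos; [apply Rdiv_le_0_compat; [nra|lra]|lra]).
  assert (N3 : 0 <= 96 * S * r^2) by nra.
  assert (HD : D^2 <= S^2) by (apply gap_sqr_le_mass_sqr).
  destruct Hmass as [Hs|[_ W]].
  - destruct Hgap as [Hc|Hc].
    + enough (24 * D^2 * S / f^2 <= 768 * r^4 / S * ((x - l)^2 + (y - u)^2)) by lra.
      pose proof (sqr_sub_le (x - l) (y - u)).
      assert (S^2 <= (2 * r^2 * f)^2) by (apply pow_incr; lra).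
      apply div_le_of_le_mul; [lra|].
      replace (768 * r ^ 4 / S * ((x - l) ^ 2 + (y - u) ^ 2) * f ^ 2)
        with (192 * (4 * r^4 * f^2) * ((x - l) ^ 2 + (y - u) ^ 2) / S) by (field; lra).
      apply le_div_of_mul_le; [lra|].
      assert (D^2 <= 8 * ((x - l) ^ 2 + (y - u) ^ 2)) by lra.
      assert (24 * D^2 * S * S <= 24 * (8 * ((x - l) ^ 2 + (y - u) ^ 2)) * S^2) by nra.
      nra.
    + enough (24 * D^2 * S / f^2 <= 96 * S * r^2) by lra.
      assert (D^2 <= (2 * (r * f))^2) by (rewrite <- (pow2_abs D); apply pow_incr; split; [apply Rabs_pos|lra]).
      apply div_le_of_le_mul; [lra|]. nra.
  - enough (24 * D^2 * S / f^2 <= 3072 / S * ((x - l)^4 + (y - u)^4)) by lra.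
    pose proof (pow4_add_le (x - l) (y - u)).
    apply div_le_of_le_mul; [lra|].
    replace (3072 / S * ((x - l) ^ 4 + (y - u) ^ 4) * f ^ 2)
      with (384 * f^2 * (8 * (x - l) ^ 4 + 8 * (y - u) ^ 4) / S) by (field; lra).
    apply le_div_of_mul_le; [lra|].
    assert (24 * D^2 * S * S <= 24 * S^4) by nra.
    nra.
Qed.

Lemma var_term_le_env : 0 < l + u ->
  (150 * (l + u)^2 + 24 * (l - u)^2 * (l + u) + 54 * (l + u)) / f^2 <=
  env l u (54 * (l + u) + 600 * r^4 + 96 * (l + u) * r^2) 0
      (1200 + 768 * r^4 / (l + u)) (1200 + 768 * r^4 / (l + u))
      (3072 / (l + u)) (3072 / (l + u)) x y.
Proof.
  intros HS0. pose proof (mass_sqr_term_le HS0). pose proof (gap_mass_term_le HS0).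
  assert (Hf : 1 <= f^2) by nra.
  assert (54 * (l + u) / f^2 <= 54 * (l + u)) by (apply div_le_of_le_mul; nra).
  assert (E : (150 * (l + u)^2 + 24 * (l - u)^2 * (l + u) + 54 * (l + u)) / f^2 =
    150 * (l + u)^2 / f^2 + 24 * (l - u)^2 * (l + u) / f^2 + 54 * (l + u) / f^2)
    by (field; nra).
  rewrite E. unfold env. lra.
Qed.

End PointwiseBounds.

Definition var_bound (l u : R) : R := 150 * (l + u)^2 + 24 * (l - u)^2 * (l + u) + 54 * (l + u).

Lemma E2_Zpair_centered_sqr l u : 0 <= l -> 0 <= u ->
  I2 l u (fun x y => (Zpair x y - (l - u)^2)^2) /\
  E2 l u (fun x y => (Zpair x y - (l - u)^2)^2) <= var_bound l u.
Proof.
  intros Hl Hu.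
  destruct (E2_env l u (6 * (l + u)^2) 0 (24 * (l - u)^2 + 6) (24 * (l - u)^2 + 6) 48 48 Hl Hu)
    as [I E].
  assert (I' : I2 l u (fun x y => (Zpair x y - (l - u)^2)^2)).
  { eapply I2_dom; eauto. intros x y.
    rewrite Rabs_pos_eq by apply pow2_ge_0. apply Zpair_centered_sqr_le. }
  split; [exact I'|].
  eapply Rle_trans; [apply (E2_mono _ _ _ _ Hl Hu I' I), Zpair_centered_sqr_le|].
  rewrite E. unfold var_bound. pose proof (pow2_ge_0 (l - u)). nra.
Qed.

Section WeightedStatistic.
Variables (a b : nat -> R) (n : nat) (w : nat -> R).
Hypotheses (Hab : rates_nonneg a b n) (Hw : forall i, 0 < w i).

Definition centered (i x y : nat) : R := (Zpair x y - (a i - b i)^2) / w i.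

Lemma centered_mean i : (i < n)%nat ->
  I2 (a i) (b i) (centered i) /\ E2 (a i) (b i) (centered i) = 0.
Proof.
  intros Hi. destruct (Hab i Hi) as [Hl Hu]. pose proof (Hw i).
  destruct (E2_Zpair _ _ Hl Hu) as [IZ EZ].
  destruct (E2_lin _ _ (/ w i) _ (fun _ _ => - (a i - b i)^2 / w i) Hl Hu IZ (I2_const _ _ _))
    as [I E].
  assert (Eq : forall x y, / w i * Zpair x y + - (a i - b i)^2 / w i = centered i x y)
    by (intros; unfold centered; field; lra).
  split; [eapply I2_ext; [exact Eq|exact I]|].
  rewrite <- (E2_ext _ _ _ _ Eq), E, EZ, E2_const. field; lra.
Qed.

Lemma centered_sqr i : (i < n)%nat ->
  I2 (a i) (b i) (fun x y => centered i x y * centered i x y) /\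
  E2 (a i) (b i) (fun x y => centered i x y * centered i x y) <= var_bound (a i) (b i) / (w i)^2.
Proof.
  intros Hi. destruct (Hab i Hi) as [Hl Hu]. pose proof (Hw i).
  destruct (E2_Zpair_centered_sqr _ _ Hl Hu) as [I E].
  assert (Eq : forall x y, / (w i)^2 * (Zpair x y - (a i - b i)^2)^2 = centered i x y * centered i x y)
    by (intros; unfold centered; field; lra).
  split; [eapply I2_ext; [exact Eq|apply I2_scal; auto]|].
  rewrite <- (E2_ext _ _ _ _ Eq), E2_scal. unfold Rdiv. rewrite Rmult_comm.
  apply Rmult_le_compat_r; [|exact E]. left; apply Rinv_0_lt_compat; nra.
Qed.

Lemma centered_cross i j : (i < n)%nat -> (j < n)%nat ->
  Integrable a b n (fun X Y => centered i (X i) (Y i) * centered j (X j) (Y j)) /\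
  ExpN a b n (fun X Y => centered i (X i) (Y i) * centered j (X j) (Y j)) =
    if Nat.eq_dec i j then E2 (a i) (b i) (fun x y => centered i x y * centered i x y) else 0.
Proof.
  intros Hi Hj. destruct (Nat.eq_dec i j) as [<-|Hne].
  - apply (ExpN_coord a b n i (fun x y => centered i x y * centered i x y) Hi), centered_sqr; auto.
  - destruct (ExpN_coord2 a b n i j (centered i) (centered j) Hi Hj Hne
      (proj1 (centered_mean i Hi)) (proj1 (centered_mean j Hj))) as [I E].
    split; auto. rewrite E, (proj2 (centered_mean i Hi)); ring.
Qed.

Definition wstat (X Y : nat -> nat) : R := sumR n (fun i => Zi X Y i / w i).

Lemma ExpN_wstat : ExpN a b n wstat = sumR n (fun i => (a i - b i)^2 / w i).
Proof.
  rewrite (ExpN_ext a b n _ (fun X Y => sumR n (fun i => (fun x y => / w i * Zpair x y) (X i) (Y i)))).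
  2:{ intros X Y; unfold wstat; apply sumR_ext; intros; unfold Zi, Zpair, Rdiv; ring. }
  destruct (ExpN_coord_sum a b n n (fun i x y => / w i * Zpair x y)) as [_ E]; auto.
  { intros i Hi. destruct (Hab i Hi). apply I2_scal; auto. apply E2_Zpair; auto. }
  rewrite E. apply sumR_ext; intros i Hi. destruct (Hab i Hi) as [Hl Hu].
  rewrite E2_scal, (proj2 (E2_Zpair _ _ Hl Hu)). unfold Rdiv; ring.
Qed.

Lemma VarN_wstat :
  ExpN a b n (fun X Y => (wstat X Y - ExpN a b n wstat)^2) <=
  sumR n (fun i => var_bound (a i) (b i) / (w i)^2).
Proof.
  rewrite ExpN_wstat.
  set (C := fun i X Y => sumR n (fun j => centered i (X i) (Y i) * centered j (X j) (Y j))).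
  rewrite (ExpN_ext a b n _ (fun X Y => sumR n (fun i => C i X Y))).
  2:{ intros X Y. unfold C. rewrite <- sumR_sqr. f_equal. unfold wstat. rewrite <- sumR_minus.
      apply sumR_ext; intros i Hi. unfold centered, Zi, Zpair. field. pose proof (Hw i); lra. }
  assert (HC : forall i, (i < n)%nat ->
    Integrable a b n (C i) /\ ExpN a b n (C i) = sumR n (fun j =>
      ExpN a b n (fun X Y => centered i (X i) (Y i) * centered j (X j) (Y j)))).
  { intros i Hi. apply (ExpN_sumR a b n Hab n). intros j Hj; apply centered_cross; auto. }
  destruct (ExpN_sumR a b n Hab n C) as [_ E]; [intros; apply HC; auto|].
  rewrite E. apply sumR_le; intros i Hi.
  rewrite (proj2 (HC i Hi)), (sumR_single n _ i Hi).
  - rewrite (proj2 (centered_cross i i Hi Hi)). destruct (Nat.eq_dec i i); [|lia].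
    apply centered_sqr; auto.
  - intros j Hj Hne. rewrite (proj2 (centered_cross i j Hi Hj)).
    destruct (Nat.eq_dec i j); [lia|auto].
Qed.

End WeightedStatistic.

(* Cauchy-Schwarz in Engel form: (sum |d_i|)^2 / T <= sum d_i^2 / f_i when the
   positive weights f_i sum to at most T. *)
Lemma sum_sqr_div_ge N (d f : nat -> R) T : 0 < T -> (forall i, (i < N)%nat -> 0 < f i) ->
  sumR N f <= T -> (sumR N (fun i => Rabs (d i)))^2 / T <= sumR N (fun i => d i ^ 2 / f i).
Proof.
  intros HT Hf HS. set (K := sumR N (fun i => Rabs (d i))). set (lam := K / T).
  assert (Pt : forall i, (i < N)%nat -> 2 * lam * Rabs (d i) - lam^2 * f i <= d i ^ 2 / f i).
  { intros i Hi. pose proof (Hf i Hi). apply le_div_of_mul_le; [lra|].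
    rewrite <- (pow2_abs (d i)). pose proof (pow2_ge_0 (Rabs (d i) - lam * f i)). nra. }
  eapply Rle_trans; [|apply sumR_le; exact Pt].
  rewrite sumR_minus, !sumR_scal. fold K.
  assert (lam^2 * sumR N f <= lam^2 * T) by (apply Rmult_le_compat_l; [apply pow2_ge_0|lra]).
  enough (K^2 / T = 2 * lam * K - lam^2 * T) by lra.
  unfold lam; field; lra.
Qed.

(* K^2 / (30 (11/2 N + K / r)) is at least min(K r, K^2 / N) / 330; it is used
   with K = m ||p - q||_1 and N = n. *)
Lemma mean_lower_bound_min K r N : 0 <= K -> 0 < r -> 0 < N ->
  1/330 * Rmin (K * r) (K^2 / N) <= K^2 / (30 * (11/2 * N + K / r)).
Proof.
  intros HK Hr HN. assert (0 <= K / r) by (apply Rdiv_le_0_compat; lra).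
  set (T := 30 * (11/2 * N + K / r)). assert (HT : 0 < T) by (unfold T; lra).
  destruct (Req_dec K 0) as [K0|K0].
  - rewrite K0. unfold Rmin; destruct (Rle_dec _ _); unfold Rdiv; ring_simplify; lra.
  - apply le_div_of_mul_le; [lra|].
    destruct (Rle_or_lt (30 * K / r) (165 * N)) as [C|C].
    + assert (T <= 330 * N) by (unfold T, Rdiv in *; lra).
      assert (Rmin (K * r) (K^2 / N) * N <= K^2)
        by (eapply Rle_trans; [apply Rmult_le_compat_r; [lra|apply Rmin_r]|]; right; field; lra).
      pose proof (Rmin_r (K * r) (K^2 / N)).
      assert (0 <= K^2 / N) by (apply Rdiv_le_0_compat; [apply pow2_ge_0|lra]).
      destruct (Rle_or_lt 0 (Rmin (K * r) (K ^ 2 / N))); nra.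
    + assert (HT2 : T * r <= 60 * K).
      { unfold T. replace (30 * (11 / 2 * N + K / r) * r) with (165 * N * r + 30 * K) by (field; lra).
        assert (165 * N * r < 30 * K) by (apply (Rmult_lt_reg_r (/ r)); [apply Rinv_0_lt_compat; lra|];
          replace (165 * N * r * / r) with (165 * N) by (field; lra); unfold Rdiv in C; lra).
        lra. }
      pose proof (Rmin_l (K * r) (K^2 / N)).
      assert (0 <= K * r) by nra.
      destruct (Rle_or_lt 0 (Rmin (K * r) (K ^ 2 / N))); nra.
Qed.

Lemma fhat_ge1 n m tX tY i : 1 <= fhat n m tX tY i.
Proof. unfold fhat. destruct (Rle_dec (INR n) m); apply Rmax_r. Qed.

Lemma condE_eq n m p q tX tY : rates_nonneg (fun i => m * p i) (fun i => m * q i) n ->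
  condE n m p q tX tY = sumR n (fun i => (m * p i - m * q i)^2 / fhat n m tX tY i).
Proof.
  intros Hab. apply (ExpN_wstat _ _ n (fhat n m tX tY) Hab).
Qed.

Lemma condVar_le n m p q tX tY : rates_nonneg (fun i => m * p i) (fun i => m * q i) n ->
  condVar n m p q tX tY <=
  sumR n (fun i => var_bound (m * p i) (m * q i) / (fhat n m tX tY i)^2).
Proof.
  intros Hab. apply (VarN_wstat _ _ n (fhat n m tX tY) Hab).
  intros i; pose proof (fhat_ge1 n m tX tY i); lra.
Qed.

(** The main estimate, for fixed n <= m and distributions p, q. *)

Section MainBound.
Variables (n : nat) (m : R) (p q : nat -> R).
Hypotheses (Hn : (1 <= n)%nat) (Hm : INR n <= m) (Hp : is_distr n p) (Hq : is_distr n q).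

Let a := fun i => m * p i.
Let b := fun i => m * q i.
Let r := sqrt (m / INR n).

Lemma n_pos : 0 < INR n.
Proof. apply lt_0_INR; lia. Qed.

Lemma m_pos : 0 < m.
Proof. pose proof n_pos; lra. Qed.

Lemma r_sqr : r^2 = m / INR n.
Proof.
  unfold r; apply pow2_sqrt. pose proof n_pos; pose proof m_pos.
  left; apply Rdiv_lt_0_compat; lra.
Qed.

Lemma r_pos : 0 < r.
Proof.
  unfold r; apply sqrt_lt_R0. pose proof n_pos; pose proof m_pos; apply Rdiv_lt_0_compat; lra.
Qed.

Lemma r_sqr_ge1 : 1 <= r^2.
Proof. rewrite r_sqr. pose proof n_pos. apply le_div_of_mul_le; lra. Qed.

Lemma n_r_sqr : INR n * r^2 = m.
Proof. rewrite r_sqr. pose proof n_pos. field. lra. Qed.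

Lemma rates_ok : rates_nonneg a b n.
Proof.
  intros i Hi. destruct Hp as [P _]. destruct Hq as [Q _]. pose proof m_pos.
  unfold a, b; split; apply Rmult_le_pos; try lra; auto.
Qed.

Lemma fhat_props tX tY i :
  let f := fhat n m tX tY i in let x := INR (tX i) in let y := INR (tY i) in
  1 <= f /\ Rabs (x - y) <= r * f /\ x + y <= r^2 * f /\
  f <= 1 + Rabs (x - y) / r + (x + y) / r^2.
Proof.
  intros f x y. pose proof r_pos as Hr. pose proof r_sqr_ge1.
  assert (Hf : f = Rmax (Rmax (Rabs (x - y) / r) ((x + y) / r^2)) 1).
  { unfold f, fhat. destruct (Rle_dec (INR n) m); [|lra]. fold r. rewrite r_sqr. reflexivity. }
  assert (H1 : Rabs (x - y) / r <= f) by (rewrite Hf; eapply Rle_trans; [apply Rmax_l|apply Rmax_l]).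
  assert (H2 : (x + y) / r^2 <= f) by (rewrite Hf; eapply Rle_trans; [apply Rmax_r|apply Rmax_l]).
  assert (P1 : 0 <= Rabs (x - y) / r) by (apply Rdiv_le_0_compat; [apply Rabs_pos|lra]).
  assert (P2 : 0 <= (x + y) / r^2).
  { apply Rdiv_le_0_compat; [|lra]. pose proof (pos_INR (tX i)); pose proof (pos_INR (tY i)).
    unfold x, y; lra. }
  split; [apply fhat_ge1|split; [|split]].
  - apply Rle_div_l in H1; lra.
  - apply Rle_div_l in H2; lra.
  - rewrite Hf. repeat apply Rmax_lub; lra.
Qed.

Definition gap i := a i - b i.
Definition mass i := a i + b i.

Lemma gap_le_mass i : (i < n)%nat -> Rabs (gap i) <= mass i.
Proof. intros Hi; destruct (rates_ok i Hi). unfold gap, mass. apply Rabs_le; lra. Qed.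

Definition K := m * l1dist n p q.

Lemma K_nonneg : 0 <= K.
Proof.
  unfold K, l1dist. pose proof m_pos. apply Rmult_le_pos; [lra|].
  apply sumR_nonneg; intros; apply Rabs_pos.
Qed.

Lemma sum_abs_gap : sumR n (fun i => Rabs (gap i)) = K.
Proof.
  unfold K, l1dist. rewrite <- sumR_scal. apply sumR_ext; intros i _.
  unfold gap, a, b. replace (m * p i - m * q i) with (m * (p i - q i)) by ring.
  rewrite Rabs_mult, Rabs_pos_eq; auto. pose proof m_pos; lra.
Qed.

Lemma sum_mass : sumR n mass = 2 * m.
Proof.
  unfold mass, a, b. rewrite sumR_plus, !sumR_scal. destruct Hp as [_ P]. destruct Hq as [_ Q].
  rewrite P, Q; ring.
Qed.

Definition env_norm i (x y : nat) : R :=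
  env (a i) (b i) (3/2 + Rabs (gap i) / r) (/ r^2) (/ r^2) (/ r^2) 0 0 (INR x) (INR y).

Definition env_mean i (x y : nat) : R :=
  if Rle_dec (Rabs (gap i)) r then env (a i) (b i) (gap i ^ 2) 0 0 0 0 0 (INR x) (INR y)
  else if Rle_dec (r * Rabs (gap i)) (mass i) then
    env (a i) (b i) (2 * r^2 * gap i ^ 2 / mass i) 0 0 0 (128 / mass i ^ 2) (128 / mass i ^ 2)
      (INR x) (INR y)
  else env (a i) (b i) (2 * r * Rabs (gap i)) 0 8 8 0 0 (INR x) (INR y).

Definition env_var i (x y : nat) : R :=
  if Rlt_dec 0 (mass i) then
    env (a i) (b i) (54 * mass i + 600 * r^4 + 96 * mass i * r^2) 0
      (1200 + 768 * r^4 / mass i) (1200 + 768 * r^4 / mass i) (3072 / mass i) (3072 / mass i)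
      (INR x) (INR y)
  else 0.

Lemma env_norm_props i : (i < n)%nat -> I2 (a i) (b i) (env_norm i) /\
  E2 (a i) (b i) (env_norm i) = 3/2 + Rabs (gap i) / r + 2 * mass i / r^2 /\
  forall x y, 0 <= env_norm i x y.
Proof.
  intros Hi; destruct (rates_ok i Hi) as [Hl Hu]. pose proof r_pos.
  assert (0 < r^2) by (apply pow_lt; lra).
  assert (0 <= / r^2) by (left; apply Rinv_0_lt_compat; lra).
  assert (0 <= Rabs (gap i) / r) by (apply Rdiv_le_0_compat; [apply Rabs_pos|lra]).
  destruct (E2_env (a i) (b i) (3/2 + Rabs (gap i) / r) (/ r^2) (/ r^2) (/ r^2) 0 0 Hl Hu) as [I E].
  split; [exact I|split].
  - unfold env_norm; rewrite E. unfold mass, Rdiv. ring.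
  - intros; apply env_nonneg; try apply pos_INR; lra.
Qed.

Lemma env_norm_ge tX tY i : (i < n)%nat -> fhat n m tX tY i <= env_norm i (tX i) (tY i).
Proof.
  intros Hi. destruct (fhat_props tX tY i) as [F1 [F2 [F3 F4]]]. destruct (rates_ok i Hi).
  apply normalizer_le_env; auto using pos_INR, r_pos.
Qed.

Lemma env_mean_mid_expect l u : 0 <= l -> 0 <= u -> r < Rabs (l - u) -> r * Rabs (l - u) <= l + u ->
  2 * r^2 * (l - u)^2 / (l + u) + 128 / (l + u)^2 * (l + 3 * l^2) + 128 / (l + u)^2 * (u + 3 * u^2)
  <= 514 * r * Rabs (l - u).
Proof.
  intros Hl Hu HD HS. pose proof r_pos. pose proof r_sqr_ge1.
  set (D := Rabs (l - u)) in *. set (S := l + u) in *.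
  assert (HS0 : 0 < S) by (pose proof (Rabs_pos (l - u)); nra).
  assert (HDD : (l - u)^2 = D^2) by (unfold D; rewrite pow2_abs; auto).
  assert (K1 : 2 * r^2 * (l - u)^2 / S <= 2 * r * D).
  { apply div_le_of_le_mul; auto. rewrite HDD.
    assert (0 <= r * D) by (apply Rmult_le_pos; lra).
    replace (2 * r ^ 2 * D ^ 2) with (2 * (r * D) * (r * D)) by ring.
    replace (2 * r * D * S) with (2 * (r * D) * S) by ring.
    apply Rmult_le_compat_l; lra. }
  assert (K2 : 128 / S ^ 2 * (l + 3 * l ^ 2) + 128 / S ^ 2 * (u + 3 * u ^ 2) <= 128 / S + 384).
  { replace (128 / S ^ 2 * (l + 3 * l ^ 2) + 128 / S ^ 2 * (u + 3 * u ^ 2))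
      with ((128 * S + 384 * (l ^ 2 + u ^ 2)) / S ^ 2) by (unfold S in *; field; lra).
    apply div_le_of_le_mul; [nra|].
    replace ((128 / S + 384) * S ^ 2) with (128 * S + 384 * S ^ 2) by (field; lra).
    unfold S. nra. }
  assert (K3 : 1 <= r * D) by nra.
  assert (K4 : 128 / S <= 128 * (r * D)).
  { apply div_le_of_le_mul; auto. assert (1 * 1 <= r * D * S) by (apply Rmult_le_compat; lra). lra. }
  lra.
Qed.

Lemma env_mean_props i : (i < n)%nat -> I2 (a i) (b i) (env_mean i) /\
  E2 (a i) (b i) (env_mean i) <= 514 * r * Rabs (gap i) /\ forall x y, 0 <= env_mean i x y.
Proof.
  intros Hi; destruct (rates_ok i Hi) as [Hl Hu]. pose proof r_pos. pose proof r_sqr_ge1.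
  pose proof (gap_le_mass i Hi). pose proof (Rabs_pos (gap i)).
  assert (HDD : gap i ^ 2 = Rabs (gap i) ^ 2) by (rewrite pow2_abs; auto).
  unfold env_mean. destruct (Rle_dec (Rabs (gap i)) r) as [Ha|Ha].
  - destruct (E2_env (a i) (b i) (gap i ^ 2) 0 0 0 0 0 Hl Hu) as [I E].
    split; [exact I|split].
    + rewrite E, HDD. nra.
    + intros; apply env_nonneg; try apply pos_INR; try lra. apply pow2_ge_0.
  - destruct (Rle_dec (r * Rabs (gap i)) (mass i)) as [Hb|Hb].
    + assert (HS : 0 < mass i) by nra.
      destruct (E2_env (a i) (b i) (2 * r^2 * gap i ^ 2 / mass i) 0 0 0
        (128 / mass i ^ 2) (128 / mass i ^ 2) Hl Hu) as [I E].
      split; [exact I|split].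
      * rewrite E. unfold gap, mass in *.
        pose proof (env_mean_mid_expect (a i) (b i) Hl Hu ltac:(lra) Hb). lra.
      * assert (0 < mass i ^ 2) by (apply pow_lt; lra).
        intros; apply env_nonneg; try apply pos_INR; try lra; apply Rdiv_le_0_compat; try lra.
        pose proof (pow2_ge_0 (gap i)). nra.
    + destruct (E2_env (a i) (b i) (2 * r * Rabs (gap i)) 0 8 8 0 0 Hl Hu) as [I E].
      split; [exact I|split].
      * rewrite E. unfold mass in Hb. nra.
      * intros; apply env_nonneg; try apply pos_INR; nra.
Qed.

Lemma env_mean_ge tX tY i : (i < n)%nat ->
  gap i ^ 2 / fhat n m tX tY i <= env_mean i (tX i) (tY i).
Proof.
  intros Hi. destruct (fhat_props tX tY i) as [F1 [F2 [F3 F4]]]. destruct (rates_ok i Hi).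
  pose proof r_pos. pose proof (pos_INR (tX i)). pose proof (pos_INR (tY i)).
  unfold env_mean, gap, mass; destruct (Rle_dec _ _); [|destruct (Rle_dec _ _)].
  - apply gap_term_le_env_small; auto.
  - apply gap_term_le_env_mid; auto; lra.
  - apply gap_term_le_env_large; auto; lra.
Qed.

Lemma env_var_props i : (i < n)%nat -> I2 (a i) (b i) (env_var i) /\
  E2 (a i) (b i) (env_var i) <= 10470 * mass i + 1368 * r^4 + 96 * mass i * r^2 + 3072 /\
  forall x y, 0 <= env_var i x y.
Proof.
  intros Hi; destruct (rates_ok i Hi) as [Hl Hu]. pose proof r_pos. pose proof r_sqr_ge1.
  assert (Hr4 : 0 < r^4) by (apply pow_lt; lra).
  assert (0 <= mass i) by (unfold mass; lra).
  unfold env_var. destruct (Rlt_dec 0 (mass i)) as [HS|HS].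
  - assert (0 <= 768 * r^4 / mass i) by (apply Rdiv_le_0_compat; lra).
    assert (0 <= 3072 / mass i) by (apply Rdiv_le_0_compat; lra).
    destruct (E2_env (a i) (b i) (54 * mass i + 600 * r^4 + 96 * mass i * r^2) 0
      (1200 + 768 * r^4 / mass i) (1200 + 768 * r^4 / mass i)
      (3072 / mass i) (3072 / mass i) Hl Hu) as [I E].
    split; [exact I|split].
    + rewrite E.
      assert (9216 * (a i ^ 2 + b i ^ 2) / mass i <= 9216 * mass i)
        by (apply div_le_of_le_mul; auto; unfold mass; nra).
      enough (E' : 54 * mass i + 600 * r ^ 4 + 96 * mass i * r ^ 2 + 0 * (a i + b i) +
        (1200 + 768 * r ^ 4 / mass i) * a i + (1200 + 768 * r ^ 4 / mass i) * b i +
        3072 / mass i * (a i + 3 * a i ^ 2) + 3072 / mass i * (b i + 3 * b i ^ 2) =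
        1254 * mass i + 1368 * r^4 + 96 * mass i * r^2 + 3072 + 9216 * (a i ^ 2 + b i ^ 2) / mass i)
        by lra.
      unfold mass in *; field; lra.
    + intros; apply env_nonneg; try apply pos_INR; nra.
  - split; [apply I2_const|split; [rewrite E2_const; nra|intros; lra]].
Qed.

Lemma env_var_ge tX tY i : (i < n)%nat ->
  var_bound (a i) (b i) / (fhat n m tX tY i)^2 <= env_var i (tX i) (tY i).
Proof.
  intros Hi. destruct (fhat_props tX tY i) as [F1 [F2 [F3 F4]]]. destruct (rates_ok i Hi).
  pose proof r_pos.
  unfold env_var, mass, var_bound; destruct (Rlt_dec _ _).
  - apply var_term_le_env; auto using pos_INR.
  - replace (a i) with 0 by lra. replace (b i) with 0 by lra.
    unfold Rdiv; ring_simplify; lra.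
Qed.

Definition sum_env (e : nat -> nat -> nat -> R) (tX tY : nat -> nat) : R :=
  sumR n (fun i => e i (tX i) (tY i)).

Definition T_norm := 30 * (11/2 * INR n + K / r).
Definition T_mean := 15420 * (K * r).
Definition T_var := 767160 * (m * r^2).

Lemma T_norm_pos : 0 < T_norm.
Proof.
  unfold T_norm. pose proof K_nonneg. pose proof r_pos. pose proof n_pos.
  assert (0 <= K / r) by (apply Rdiv_le_0_compat; lra). lra.
Qed.

Lemma T_mean_nonneg : 0 <= T_mean.
Proof. unfold T_mean. pose proof K_nonneg. pose proof r_pos. nra. Qed.

Lemma T_var_pos : 0 < T_var.
Proof. unfold T_var. pose proof m_pos. pose proof r_sqr_ge1. nra. Qed.

Lemma scale_mean : m * sqrt m * l1dist n p q / sqrt (INR n) = K * r.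
Proof.
  unfold K, r. pose proof n_pos. rewrite sqrt_div_alt by lra.
  assert (0 < sqrt (INR n)) by (apply sqrt_lt_R0; auto). field. lra.
Qed.

Lemma scale_var : m ^ 2 / INR n = m * r^2.
Proof. rewrite r_sqr. pose proof n_pos. field. lra. Qed.

Lemma mean_lower tX tY : sum_env env_norm tX tY < T_norm ->
  1/330 * Rmin (m * sqrt m * l1dist n p q / sqrt (INR n)) (m ^ 2 * l1dist n p q ^ 2 / INR n)
  <= condE n m p q tX tY.
Proof.
  intros HS. pose proof n_pos. pose proof r_pos. pose proof T_norm_pos.
  rewrite scale_mean, (condE_eq n m p q tX tY rates_ok).
  replace (m ^ 2 * l1dist n p q ^ 2 / INR n) with (K^2 / INR n) by (unfold K; field; lra).
  eapply Rle_trans; [apply (mean_lower_bound_min K r (INR n) K_nonneg); lra|].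
  fold T_norm. rewrite <- sum_abs_gap.
  apply (sum_sqr_div_ge n gap (fhat n m tX tY) T_norm); auto.
  - intros i _. pose proof (fhat_ge1 n m tX tY i); lra.
  - left. eapply Rle_lt_trans; [|exact HS]. apply sumR_le; intros; apply env_norm_ge; auto.
Qed.

Lemma mean_upper tX tY : ~ condE n m p q tX tY <= 15420 * (m * sqrt m * l1dist n p q / sqrt (INR n)) ->
  1 <= / T_mean * sum_env env_mean tX tY.
Proof.
  intros HE. rewrite scale_mean, (condE_eq n m p q tX tY rates_ok) in HE. fold T_mean in HE.
  assert (LE : sumR n (fun i => gap i ^ 2 / fhat n m tX tY i) <= sum_env env_mean tX tY)
    by (apply sumR_le; intros; apply env_mean_ge; auto).
  destruct T_mean_nonneg as [HT|HT].
  - rewrite Rmult_comm. apply le_div_of_mul_le; auto. unfold gap, a, b in LE. lra.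
  - exfalso. apply HE. pose proof r_pos. pose proof m_pos.
    assert (Hd : l1dist n p q = 0).
    { assert (HK : K * r = 0) by (unfold T_mean in HT; lra).
      destruct (Rmult_integral _ _ HK) as [Hz|Hz]; [|lra].
      unfold K in Hz. destruct (Rmult_integral _ _ Hz); lra. }
    assert (Z : forall i, (i < n)%nat -> Rabs (p i - q i) = 0)
      by (apply sumR_eq0; [intros; apply Rabs_pos|exact Hd]).
    rewrite <- HT, (sumR_ext n _ (fun _ => 0)), sumR_const; [lra|].
    intros i Hi. pose proof (Z i Hi) as Zi. apply Rabs_eq_0 in Zi.
    replace (m * p i - m * q i) with (m * (p i - q i)) by ring. rewrite Zi. unfold Rdiv; ring.
Qed.

Lemma var_upper tX tY : ~ condVar n m p q tX tY <= 767160 * (m ^ 2 / INR n) ->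
  1 <= / T_var * sum_env env_var tX tY.
Proof.
  intros HV. rewrite scale_var in HV. fold T_var in HV. pose proof T_var_pos.
  assert (LE : condVar n m p q tX tY <= sum_env env_var tX tY).
  { eapply Rle_trans; [apply (condVar_le n m p q tX tY rates_ok)|].
    apply sumR_le; intros; apply env_var_ge; auto. }
  rewrite Rmult_comm. apply le_div_of_mul_le; auto. lra.
Qed.

Lemma sum_env_nonneg e tX tY : (forall i, (i < n)%nat -> forall x y, 0 <= e i x y) ->
  0 <= sum_env e tX tY.
Proof. intros He. apply sumR_nonneg; intros; apply He; auto. Qed.

Definition markov_lower (tX tY : nat -> nat) : R :=
  1 - / T_norm * sum_env env_norm tX tY - / T_mean * sum_env env_mean tX tY
    - / T_var * sum_env env_var tX tY.

Lemma good_ind_ge tX tY : markov_lower tX tY <= good_ind (1/330) 15420 767160 n m p q tX tY.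
Proof.
  unfold markov_lower.
  assert (Hr : forall T e, 0 <= T -> (forall i, (i < n)%nat -> forall x y, 0 <= e i x y) ->
    0 <= / T * sum_env e tX tY).
  { intros T e HT He. apply Rmult_le_pos; [|apply sum_env_nonneg; auto].
    destruct HT as [HT|HT]; [left; apply Rinv_0_lt_compat; auto|rewrite <- HT, Rinv_0; lra]. }
  pose proof T_norm_pos. pose proof T_mean_nonneg. pose proof T_var_pos.
  pose proof (Hr T_norm env_norm ltac:(lra) (fun i Hi => proj2 (proj2 (env_norm_props i Hi)))).
  pose proof (Hr T_mean env_mean ltac:(lra) (fun i Hi => proj2 (proj2 (env_mean_props i Hi)))).
  pose proof (Hr T_var env_var ltac:(lra) (fun i Hi => proj2 (proj2 (env_var_props i Hi)))).
  unfold good_ind; cbv zeta.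
  destruct (Rle_dec _ _) as [A|A]; [destruct (Rle_dec _ _) as [B|B];
    [destruct (Rle_dec _ _) as [C|C]|]|].
  - lra.
  - pose proof (var_upper tX tY C). lra.
  - pose proof (mean_upper tX tY B). lra.
  - destruct (Rlt_or_le (sum_env env_norm tX tY) T_norm) as [L|L].
    + exfalso; apply A, mean_lower; auto.
    + assert (1 <= / T_norm * sum_env env_norm tX tY)
        by (rewrite Rmult_comm; apply le_div_of_mul_le; lra).
      lra.
Qed.

Lemma ExpN_sum_env e : (forall i, (i < n)%nat -> I2 (a i) (b i) (e i)) ->
  Integrable a b n (sum_env e) /\ ExpN a b n (sum_env e) = sumR n (fun i => E2 (a i) (b i) (e i)).
Proof. intros He. apply ExpN_coord_sum; auto using rates_ok. Qed.

Lemma expect_norm : / T_norm * ExpN a b n (sum_env env_norm) = 1/30.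
Proof.
  pose proof T_norm_pos. pose proof r_pos. pose proof n_r_sqr.
  rewrite (proj2 (ExpN_sum_env env_norm (fun i Hi => proj1 (env_norm_props i Hi)))).
  rewrite (sumR_ext n _ (fun i => 3/2 + / r * Rabs (gap i) + 2 / r^2 * mass i))
    by (intros i Hi; rewrite (proj1 (proj2 (env_norm_props i Hi))); unfold Rdiv; ring).
  rewrite !sumR_plus, !sumR_scal, sumR_const, sum_abs_gap, sum_mass.
  replace (2 / r ^ 2 * (2 * m)) with (4 * INR n) by (rewrite <- n_r_sqr; field; lra).
  pose proof n_pos. pose proof K_nonneg.
  unfold T_norm. field. split; [lra|]. nra.
Qed.

Lemma expect_mean : / T_mean * ExpN a b n (sum_env env_mean) <= 1/30.
Proof.
  rewrite (proj2 (ExpN_sum_env env_mean (fun i Hi => proj1 (env_mean_props i Hi)))).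
  assert (S : sumR n (fun i => E2 (a i) (b i) (env_mean i)) <= 514 * r * K).
  { rewrite <- sum_abs_gap, <- sumR_scal. apply sumR_le; intros i Hi. apply env_mean_props; auto. }
  pose proof r_pos. destruct T_mean_nonneg as [HT|HT].
  - apply Rle_trans with (/ T_mean * (514 * r * K)).
    + apply Rmult_le_compat_l; [left; apply Rinv_0_lt_compat; auto|auto].
    + unfold T_mean in *. right. field. nra.
  - rewrite <- HT, Rinv_0. lra.
Qed.

Lemma expect_var : / T_var * ExpN a b n (sum_env env_var) <= 1/30.
Proof.
  pose proof T_var_pos. pose proof m_pos. pose proof r_sqr_ge1. pose proof n_pos. pose proof n_r_sqr.
  rewrite (proj2 (ExpN_sum_env env_var (fun i Hi => proj1 (env_var_props i Hi)))).
  assert (S : sumR n (fun i => E2 (a i) (b i) (env_var i)) <=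
              sumR n (fun i => (1368 * r^4 + 3072) + (10470 + 96 * r^2) * mass i)).
  { apply sumR_le; intros i Hi. pose proof (proj1 (proj2 (env_var_props i Hi))). nra. }
  rewrite sumR_plus, sumR_const, sumR_scal, sum_mass in S.
  assert (K' : sumR n (fun i => E2 (a i) (b i) (env_var i)) <= 25572 * (m * r^2)).
  { eapply Rle_trans; [exact S|].
    assert (INR n * r^4 = m * r^2) by (rewrite <- n_r_sqr; ring).
    assert (INR n <= m * r^2) by nra.
    assert (m <= m * r^2) by nra.
    nra. }
  apply Rle_trans with (/ T_var * (25572 * (m * r^2))).
  - apply Rmult_le_compat_l; [left; apply Rinv_0_lt_compat; auto|auto].
  - unfold T_var in *. right. field. nra.
Qed.

Lemma good_event_prob : ExpN a b n (fun tX tY => good_ind (1/330) 15420 767160 n m p q tX tY) >= 9 / 10.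
Proof.
  pose proof rates_ok as Hab.
  destruct (ExpN_sum_env env_norm (fun i Hi => proj1 (env_norm_props i Hi))) as [IA _].
  destruct (ExpN_sum_env env_mean (fun i Hi => proj1 (env_mean_props i Hi))) as [IB _].
  destruct (ExpN_sum_env env_var (fun i Hi => proj1 (env_var_props i Hi))) as [IC _].
  destruct (ExpN_additive a b n Hab _ _ (Integrable_scal a b n (- / T_mean) _ IB)
                                        (Integrable_scal a b n (- / T_var) _ IC)) as [IBC EBC].
  destruct (ExpN_additive a b n Hab _ _ (Integrable_const a b n 1)
                                        (Integrable_scal a b n (- / T_norm) _ IA)) as [I1A E1A].
  destruct (ExpN_additive a b n Hab _ _ I1A IBC) as [IL EL].
  assert (Eq : forall X Y, 1 + - / T_norm * sum_env env_norm X Y +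
    (- / T_mean * sum_env env_mean X Y + - / T_var * sum_env env_var X Y) = markov_lower X Y)
    by (intros; unfold markov_lower; ring).
  rewrite (ExpN_ext a b n _ _ Eq), E1A, EBC, !ExpN_scal, ExpN_const in EL.
  (* The good event is an indicator, hence integrable, and dominates markov_lower. *)
  assert (Ig : Integrable a b n (fun tX tY => good_ind (1/330) 15420 767160 n m p q tX tY)).
  { apply (Integrable_dom a b n Hab _ (fun _ _ => 1) (Integrable_const a b n 1)). intros X Y.
    unfold good_ind; cbv zeta. repeat destruct (Rle_dec _ _); rewrite ?Rabs_R1, ?Rabs_R0; lra. }
  pose proof (ExpN_mono a b n Hab _ _ (Integrable_ext a b n _ _ Eq IL) Ig good_ind_ge) as M.
  pose proof expect_norm. pose proof expect_mean. pose proof expect_var.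
  lra.
Qed.

End MainBound.

Theorem lemma2p3 :
  exists c1 c2 c3 : R, 0 < c1 /\ 0 < c2 /\ 0 < c3 /\
  forall (n : nat) (m : R) (p q : nat -> R),
    (1 <= n)%nat -> INR n <= m -> is_distr n p -> is_distr n q ->
    ExpN (fun i => m * p i) (fun i => m * q i) n
      (fun tX tY => good_ind c1 c2 c3 n m p q tX tY) >= 9 / 10.
Proof.
  exists (1/330), 15420, 767160. split; [lra|split; [lra|split; [lra|]]].
  intros n m p q Hn Hm Hp Hq. apply good_event_prob; auto.
Qed.
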